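(* Let $A=(a_\alpha)_{\alpha\in I_4^4}$ be a $4$-dimensional polystochastic matrix of order $4$. Then $\operatorname{per} A>0$.
   Context: For integers $d,n\ge 1$ let $I_n^d=\{(\alpha_1,\dots,\alpha_d):\alpha_i\in\{0,\dots,n-1\}\}$. A $d$-dimensional matrix of order $n$ is an array $A=(a_\alpha)_{\alpha\in I_n^d}$ of real numbers. A line of $A$ is a set of $n$ indices obtained by fixing $d-1$ of the coordinates and letting the remaining coordinate range over $\{0,\dots,n-1\}$. $A$ is polystochastic if $a_\alpha\ge 0$ for all $\alpha$ and $\sum_{\alpha\in l}a_\alpha=1$ for every line $l$. A diagonal of $A$ is a set $\{\alpha^1,\dots,\alpha^n\}$ of $n$ indices such that any two distinct indices $\alpha^i,\alpha^j$ differ in every coordinate. Writing $D(A)$ for the set of all diagonals, the permanent is $\operatorname{per}A=\sum_{p\in D(A)}\prod_{\alpha\in p}a_\alpha$. (Since $A$ is nonnegative, $\operatorname{per}A>0$ is equivalent to the existence of a diagonal all of whose entries are positive.) *)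

From HB Require Import structures.
From mathcomp Require Import all_boot all_order all_algebra.
Set Implicit Arguments. Unset Strict Implicit. Unset Printing Implicit Defensive.
Import Order.TTheory GRing.Theory Num.Theory.
Local Open Scope ring_scope.

Definition index (d n : nat) := {ffun 'I_d -> 'I_n}.

Definition mdmatrix (R : Type) (d n : nat) := index d n -> R.

Definition line (d n : nat) (k : 'I_d) (alpha : index d n) : {set index d n} :=
  [set beta : index d n | [forall j : 'I_d, (j != k) ==> (beta j == alpha j)]].

Definition polystochastic (R : numDomainType) (d n : nat) (A : mdmatrix R d n) : Prop :=
  (forall alpha, 0 <= A alpha) /\
  (forall (k : 'I_d) (alpha : index d n), \sum_(beta in line k alpha) A beta = 1).

Definition diagonal (d n : nat) (p : {set index d n}) : bool :=
  (#|p| == n)%N &&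
  [forall a in p, forall b in p, (a != b) ==> [forall j : 'I_d, a j != b j]].

Definition per (R : numDomainType) (d n : nat) (A : mdmatrix R d n) : R :=
  \sum_(p : {set index d n} | diagonal p) \prod_(alpha in p) A alpha.

(* Relabelling the symbols of each coordinate preserves polystochasticity and positive
   diagonals.  A positive entry of a doubly stochastic 4 x 4 matrix lies on a positive
   diagonal; applied to three 2-dimensional slices, this lets us relabel so that the cells
   (i,i,0,0), (0,i,i,0) and (0,0,i,i) are positive for every i.
   What remains is propositional reasoning on the pattern of positive cells, checked by a
   reverse-unit-propagation refutation.  Its clauses say that every line has a positive
   cell, that the normalised cells are positive, that no diagonal is entirely positive (the
   negated conclusion), and that a 2-dimensional slice with a positive cell outside a block
   P x Q, |P| + |Q| = 4, also has one inside it: comparing row and column sums, a zero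
   block forces a zero complementary block.  The 4 x 4 fact is proved by the same kind of
   refutation in dimension 2. *)

From Pilot Require Import Defs.
From mathcomp Require Import all_boot all_order all_algebra perm.
Set Implicit Arguments. Unset Strict Implicit. Unset Printing Implicit Defensive.
Import Order.POrderTheory GRing.Theory Num.Theory.
Local Notation index := Defs.index.
Local Open Scope ring_scope.

Section ReverseUnitPropagation.
Variable V : eqType.

Definition lit := (bool * V)%type.
Definition negl (l : lit) : lit := (~~ l.1, l.2).

Fixpoint rup_conflict (db : seq (seq lit)) (asg : seq lit) (hs : seq nat) : bool :=
  if hs is h :: hs' then
    if (h < size db)%N then
      match [seq l <- nth [::] db h | negl l \notin asg] with
      | [::] => true
      | [:: l] => rup_conflict db (l :: asg) hs'
      | _ => false
      end
    else false
  else false.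

Fixpoint rup_refutes (db : seq (seq lit)) (steps : seq (seq lit * seq nat)) : bool :=
  if steps is (C, hs) :: steps' then
    rup_conflict db (map negl C) hs &&
    (if C is [::] then true else rup_refutes (rcons db C) steps')
  else false.

Variable m : V -> bool.

Definition litv (l : lit) := m l.2 == l.1.

Lemma litv_negl l : litv (negl l) = ~~ litv l.
Proof. by case: l => b v; rewrite /litv /=; case: (m v); case: b. Qed.

Lemma rup_conflict_sound db asg hs :
  all (has litv) db -> all litv asg -> ~~ rup_conflict db asg hs.
Proof.
elim: hs asg => [//|h hs IH] asg Hdb Hasg /=.
case: ifP => // hlt.
have Hsat : has litv [seq l <- nth [::] db h | negl l \notin asg].
  have /hasP [l Hl Hv] : has litv (nth [::] db h) by apply: (all_nthP [::] Hdb).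
  apply/hasP; exists l => //; rewrite mem_filter Hl andbT; apply/negP => Hn.
  by move/allP: Hasg => /(_ _ Hn); rewrite litv_negl Hv.
case: [seq l <- _ | _] Hsat => [|l [|//]] //=.
by rewrite orbF => Hl; apply: IH; rewrite //= Hl Hasg.
Qed.

Lemma rup_refutes_sound db steps : all (has litv) db -> ~~ rup_refutes db steps.
Proof.
elim: steps db => [//|[C hs] steps IH] db Hdb /=; apply/nandP.
case Hr: (rup_conflict db (map negl C) hs); [right | by left].
have HC : has litv C.
  apply/negPn/negP => Hn; move: Hr; apply/negP/rup_conflict_sound => //.
  apply/allP => l /mapP [l' Hl' ->]; rewrite litv_negl.
  by apply: contra Hn => ?; apply/hasP; exists l'.
case: C HC {Hr} => [//|l C] HC.
by apply: IH; rewrite all_rcons HC Hdb.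
Qed.

Variables (S : Type) (clause : S -> option (seq lit)).

Definition certificate_ok (ins : seq S) (steps : seq (seq lit * seq nat)) :=
  all (fun s => isSome (clause s)) ins &&
  rup_refutes (map (fun s => odflt [::] (clause s)) ins) steps.

Lemma certificate_ok_sound ins steps :
  (forall s C, clause s = Some C -> has litv C) -> ~~ certificate_ok ins steps.
Proof.
move=> Hcl; apply/nandP; case Hins: (all _ ins); [right | by left].
apply: rup_refutes_sound; elim: ins Hins => //= s ins IH /andP [Hs Hins].
by rewrite IH // andbT; case E: (clause s) Hs => [C|] //= _; apply: Hcl E.
Qed.

End ReverseUnitPropagation.

Section Lines.
Variables d n : nat.

Definition upd (a : index d n) (k : 'I_d) (t : 'I_n) : index d n :=
  [ffun i => if i == k then t else a i].

Lemma line_upd (k : 'I_d) (a : index d n) : line k a = [set upd a k t | t : 'I_n].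
Proof.
apply/setP => b; rewrite inE; apply/forallP/imsetP.
  move=> H; exists (b k) => //; apply/ffunP => i; rewrite ffunE.
  by case: eqP => [->|/eqP ne] //; move: (H i); rewrite ne => /eqP.
by move=> [t _ ->] j; rewrite ffunE; apply/implyP => /negbTE ->.
Qed.

Lemma sum_line (R : numDomainType) (k : 'I_d) (a : index d n) (F : index d n -> R) :
  \sum_(b in line k a) F b = \sum_(t : 'I_n) F (upd a k t).
Proof.
rewrite line_upd big_imset //= => t1 t2 _ _ /ffunP /(_ k).
by rewrite !ffunE eqxx.
Qed.

Lemma upd_id (a : index d n) k t : a k = t -> upd a k t = a.
Proof. by move=> <-; apply/ffunP => i; rewrite ffunE; case: eqP => [->|]. Qed.

Lemma upd_comm (a : index d n) j k u v : j != k ->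
  upd (upd a j u) k v = upd (upd a k v) j u.
Proof.
move=> ne; apply/ffunP => i; rewrite !ffunE.
by case: (eqVneq i k) => [->|]; [rewrite eq_sym (negbTE ne) | case: (eqVneq i j)].
Qed.

End Lines.

Section DoublyStochastic.
Variables (R : numDomainType) (n : nat).

Definition doubly_stochastic (f : 'I_n -> 'I_n -> R) :=
  [/\ forall u v, 0 <= f u v, forall u, \sum_v f u v = 1 & forall v, \sum_u f u v = 1].

Lemma doubly_stochastic_perml (f : 'I_n -> 'I_n -> R) (s : {perm 'I_n}) :
  doubly_stochastic f -> doubly_stochastic (fun u v => f (s u) v).
Proof.
case=> f0 Hr Hc; split=> [u v|u|v] //.
by rewrite -(Hc v) [RHS](reindex_inj (@perm_inj _ s)).
Qed.

(* Rows [P] carry mass [#|P|] in the columns off [Q], and so do all rows together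
   when [#|P| + #|Q| = n]; hence nothing is left for the rows off [P]. *)
Lemma zero_block_compl (f : 'I_n -> 'I_n -> R) (P Q : {pred 'I_n}) :
  doubly_stochastic f -> (#|P| + #|Q| = n)%N ->
  (forall u v, u \in P -> v \in Q -> f u v = 0) ->
  forall u v, u \notin P -> v \notin Q -> f u v = 0.
Proof.
case=> f0 Hr Hc Hcard Z u0 v0 Pu0 Qv0.
have rows_P : \sum_(v | v \notin Q) \sum_(u in P) f u v = #|P|%:R.
  rewrite exchange_big -sumr_const; apply: eq_bigr => u Pu.
  rewrite -(Hr u) [RHS](bigID (mem Q)) /= [X in _ = X + _]big1 ?add0r //.
  by move=> v Qv; apply: Z.
have all_rows : \sum_(v | v \notin Q) \sum_u f u v = #|P|%:R.
  rewrite (eq_bigr (fun _ => 1)) ?sumr_const; last by move=> v _; apply: Hc.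
  congr _%:R; apply/eqP; rewrite -(eqn_add2l #|Q|) [(#|Q| + #|P|)%N]addnC Hcard.
  by rewrite -[X in _ == X](card_ord n) -(cardC Q).
have off_P : \sum_(v | v \notin Q) \sum_(u | u \notin P) f u v = 0.
  move: all_rows; under eq_bigr do rewrite (bigID (mem P)) /=.
  by rewrite big_split /= rows_P -[RHS]addr0 => /addrI.
apply: (psumr_eq0P _ (psumr_eq0P _ off_P Qv0)) => // v _.
exact: sumr_ge0.
Qed.

Lemma card_ord_in_seq (s : seq nat) :
  uniq s -> all (gtn n) s -> #|[pred r : 'I_n | val r \in s]| = size s.
Proof.
move=> Us Hs; rewrite cardE -(size_map val); apply: perm_size; apply: uniq_perm.
- by rewrite (map_inj_uniq val_inj) enum_uniq.
- exact: Us.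
move=> x; apply/mapP/idP => [[r] | xs]; first by rewrite mem_enum inE => ? ->.
have xn : (x < n)%N by move/allP: Hs => /(_ _ xs).
by exists (Ordinal xn); rewrite ?mem_enum ?inE.
Qed.

End DoublyStochastic.

Section Slices.
Variables (R : numDomainType) (d n : nat) (A : mdmatrix R d n).

Definition slice (b : index d n) (j k : 'I_d) (u v : 'I_n) := A (upd (upd b j u) k v).

Lemma slice_doubly_stochastic b j k :
  polystochastic A -> j != k -> doubly_stochastic (slice b j k).
Proof.
case=> A0 Al njk; split=> [u v|u|v]; rewrite /slice //.
  by rewrite -sum_line Al.
under eq_bigr do rewrite upd_comm //.
by rewrite -sum_line Al.
Qed.

End Slices.

Section Diagonals.
Variables (R : numDomainType) (d n : nat).

Definition has_pos_diagonal (A : mdmatrix R d n) : bool :=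
  [exists p : {set index d n}, diagonal p && [forall a in p, 0 < A a]].

Lemma per_gt0 (A : mdmatrix R d n) :
  (forall a, 0 <= A a) -> has_pos_diagonal A -> 0 < per A.
Proof.
move=> A0 /existsP [p /andP [Hp /forall_inP Hpos]].
rewrite /per (bigD1 p) //= ltr_pwDl ?prodr_gt0 //.
by apply: sumr_ge0 => q _; apply: prodr_ge0 => a _.
Qed.

Lemma has_pos_diagonal_imset (A : mdmatrix R d n) (j0 : 'I_d) (g : 'I_n -> index d n) :
  (forall j, injective (g^~ j)) -> (forall i, 0 < A (g i)) -> has_pos_diagonal A.
Proof.
move=> g_inj Hpos; apply/existsP; exists [set g i | i : 'I_n].
rewrite /diagonal -andbA; apply/and3P; split; last by apply/forall_inP => _ /imsetP [i _ ->].
  by rewrite card_imset ?card_ord // => i i' E; apply: (g_inj j0); rewrite /= E.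
apply/forall_inP => _ /imsetP [i _ ->]; apply/forall_inP => _ /imsetP [i' _ ->].
apply/implyP => ne; apply/forallP => j; apply: contra ne => /eqP /g_inj -> //.
Qed.

Definition relab (g : 'I_d -> {perm 'I_n}) (a : index d n) : index d n :=
  [ffun k => g k (a k)].

Lemma relab_inj g : injective (relab g).
Proof. by move=> a b /ffunP E; apply/ffunP => k; move: (E k); rewrite !ffunE => /perm_inj. Qed.

Lemma relab_upd g a k t : relab g (upd a k t) = upd (relab g a) k (g k t).
Proof. by apply/ffunP => i; rewrite !ffunE; case: eqP => [->|]. Qed.

Lemma polystochastic_relab (A : mdmatrix R d n) g :
  polystochastic A -> polystochastic (A \o relab g).
Proof.
case=> A0 Al; split=> [a|k a]; first exact: A0.
rewrite sum_line /=.
under eq_bigr do rewrite relab_upd.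
by rewrite -(Al k (relab g a)) sum_line [RHS](reindex_inj (@perm_inj _ (g k))).
Qed.

Lemma has_pos_diagonal_relab (A : mdmatrix R d n) g :
  has_pos_diagonal (A \o relab g) -> has_pos_diagonal A.
Proof.
case/existsP => p; rewrite /diagonal -andbA => /and3P [Hcard /forall_inP Hd /forall_inP Hpos].
apply/existsP; exists (relab g @: p); rewrite /diagonal -andbA; apply/and3P; split.
- by rewrite card_imset //; apply: relab_inj.
- apply/forall_inP => _ /imsetP [a ap ->]; apply/forall_inP => _ /imsetP [b bp ->].
  apply/implyP => ne; have /implyP := forall_inP (Hd a ap) b bp.
  have nab : a != b by apply: contra ne => /eqP ->.
  move=> /(_ nab) /forallP Hab.
  by apply/forallP => j; rewrite !ffunE (inj_eq perm_inj).
- by apply/forall_inP => _ /imsetP [a ap ->]; apply: Hpos.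
Qed.

End Diagonals.

Section Cells.
Local Open Scope nat_scope.

Definition nth_ord (l : seq nat) (i : 'I_4) : 'I_4 := inord (nth 0 l i).

Lemma nth_ord_inj l : perm_eq l (iota 0 4) -> injective (nth_ord l).
Proof.
move=> Hl i i'; have U : uniq l by rewrite (perm_uniq Hl) iota_uniq.
have sz : size l = 4 by rewrite (perm_size Hl) size_iota.
have lt4 (x : 'I_4) : nth 0 l x < 4.
  by have := mem_nth 0 (_ : x < size l); rewrite (perm_mem Hl) mem_iota sz; apply.
rewrite /nth_ord => /(congr1 (@nat_of_ord 4)); rewrite !inordK // => /eqP; rewrite nth_uniq ?sz //.
by move/eqP/val_inj.
Qed.

Lemma inord0 n : inord 0 = ord0 :> 'I_n.+1.
Proof. by apply: val_inj; rewrite /= inordK. Qed.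

Lemma nth_ord_iota (i : 'I_4) : nth_ord (iota 0 4) i = i.
Proof. by rewrite /nth_ord nth_iota // inord_val. Qed.

Variable d : nat.

Definition decode (c : seq nat) : index d 4 := [ffun k : 'I_d => inord (nth 0 c k)].

Definition transversal (ls : seq (seq nat)) (i : 'I_4) : index d 4 :=
  decode [seq nth 0 l i | l <- iota 0 4 :: ls].

Lemma decode_set_nth c (k : 'I_d) t : decode (set_nth 0 c k t) = upd (decode c) k (inord t).
Proof. by apply/ffunP => i; rewrite !ffunE nth_set_nth /= (inj_eq val_inj); case: eqP. Qed.

Lemma transversalE ls i (j : 'I_d) :
  transversal ls i j = nth_ord (nth [::] (iota 0 4 :: ls) j) i.
Proof.
rewrite ffunE /nth_ord; case: (ltnP j (size ls).+1) => [lt|ge].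
  by rewrite (nth_map [::]).
by rewrite !nth_default ?size_map.
Qed.

Lemma transversal_inj ls (j : 'I_d) :
  all (perm_eq^~ (iota 0 4)) ls -> d <= (size ls).+1 -> injective (transversal ls ^~ j).
Proof.
move=> Hls Hd i i'; rewrite !transversalE; apply: nth_ord_inj.
have /(all_nthP [::]) : all (perm_eq^~ (iota 0 4)) (iota 0 4 :: ls).
  by apply/andP; split.
by apply; apply: leq_trans Hd.
Qed.

End Cells.
Arguments decode {d}.

Section Clauses.
Local Open Scope nat_scope.

Definition set_nth2 (c : seq nat) (j k u v : nat) := set_nth 0 (set_nth 0 c j u) k v.

Definition block_ok (Rs Cs : seq nat) (u v : nat) :=
  [&& [&& u < 4, v < 4, u \notin Rs & v \notin Cs],
      [&& uniq Rs, uniq Cs, all (gtn 4) Rs & all (gtn 4) Cs] & size Rs + size Cs == 4].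

(* [CLine k c]: the line through [c] in direction [k] has a positive cell.
   [CBlock j k c Rs Cs u v]: in the slice through [c] in directions [j], [k], if [(u, v)]
   is positive then so is a cell of the block [Rs x Cs] (see [zero_block_compl]).
   [CDiag ls]: some cell of [transversal ls] is not positive.
   [CUnit c]: the cell [c] is positive. *)
Inductive clause_spec :=
| CLine of nat & seq nat
| CBlock of nat & nat & seq nat & seq nat & seq nat & nat & nat
| CDiag of seq (seq nat)
| CUnit of seq nat.

Definition clause_of (d : nat) (units : seq (seq nat)) (diag_ok : pred (seq (seq nat)))
    (cs : clause_spec) : option (seq (lit (seq nat))) :=
  match cs with
  | CLine k c => if k < d then Some [seq (true, set_nth 0 c k t) | t <- iota 0 4] else None
  | CBlock j k c Rs Cs u v =>
      if [&& j < d, k < d, j != k & block_ok Rs Cs u v] then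
        Some ((false, set_nth2 c j k u v) :: [seq (true, set_nth2 c j k r s) | r <- Rs, s <- Cs])
      else None
  | CDiag ls =>
      if diag_ok ls then Some [seq (false, [seq nth 0 l i | l <- iota 0 4 :: ls]) | i <- iota 0 4]
      else None
  | CUnit c => if c \in units then Some [:: (true, c)] else None
  end.

(* Literal [2 x + b] asserts positivity of the cell whose coordinates are the base-4
   digits of [x], least significant first, when [b = 0], and its negation when [b = 1]. *)
Definition lit_code (d x : nat) : lit (seq nat) :=
  (~~ odd x, [seq x./2 %/ 4 ^ i %% 4 | i <- iota 0 d]).

Definition decode_steps (d : nat) (steps : seq (seq nat * seq nat)) :=
  [seq (map (lit_code d) st.1, st.2) | st <- steps].

End Clauses.

Lemma block_ok_pos (R : numDomainType) (f : 'I_4 -> 'I_4 -> R) Rs Cs u v :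
  doubly_stochastic f -> block_ok Rs Cs u v -> 0 < f (inord u) (inord v) ->
  exists r s, [/\ r \in Rs, s \in Cs & 0 < f (inord r) (inord s)].
Proof.
move=> Hf /and3P [/and4P [u4 v4 uR vC] /and4P [URs UCs Rs4 Cs4] /eqP sz] Hpos.
pose P := [pred r : 'I_4 | val r \in Rs]; pose Q := [pred s : 'I_4 | val s \in Cs].
case: (pickP [pred rs : 'I_4 * 'I_4 | [&& rs.1 \in P, rs.2 \in Q & 0 < f rs.1 rs.2]]).
  by move=> [r s] /and3P [Pr Qs rs_pos]; exists (val r), (val s); rewrite !inord_val.
move=> no_pos; have Z r s : r \in P -> s \in Q -> f r s = 0.
  move=> Pr Qs; have [f0 _ _] := Hf.
  move: (f0 r s); rewrite le_eqVlt => /orP [/eqP <- //|rs_pos].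
  by have := no_pos (r, s); rewrite /= Pr Qs rs_pos.
have PQ : (#|P| + #|Q| = 4)%N by rewrite !card_ord_in_seq.
have Pu : inord u \notin P by rewrite inE /= inordK.
have Qv : inord v \notin Q by rewrite inE /= inordK.
by move: Hpos; rewrite (zero_block_compl Hf PQ Z Pu Qv) ltxx.
Qed.

Section CertificateSoundness.
Variables (R : numDomainType) (d : nat) (A : mdmatrix R d 4).
Variables (units : seq (seq nat)) (diag_ok : pred (seq (seq nat))).
Hypothesis A_poly : polystochastic A.
Hypothesis units_pos : forall c, c \in units -> 0 < A (decode c).
Hypothesis no_pos_transversal :
  forall ls, diag_ok ls -> ~ (forall i, 0 < A (transversal d ls i)).

Definition cell_pos (c : seq nat) := 0 < A (decode c).

Lemma clause_of_sound cs C : clause_of d units diag_ok cs = Some C -> has (litv cell_pos) C.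
Proof.
have [A0 Aline] := A_poly.
case: cs => [k c|j k c Rs Cs u v|ls|c]; rewrite /clause_of.
- case: ifP => // k_lt /Some_inj <-; pose k' := Ordinal k_lt.
  have [t /andP [_ t_pos]] : exists t, true && (0 < A (upd (decode c) k' t)).
    by apply: psumr_neq0P => [t _ //|]; rewrite -sum_line Aline; apply/eqP; rewrite oner_neq0.
  apply/hasP; exists (true, set_nth 0%N c k t).
    by apply: (map_f (fun t => (true, set_nth 0%N c k t))); rewrite mem_iota add0n ltn_ord.
  by rewrite /litv /cell_pos /= (decode_set_nth c k') inord_val t_pos.
- case: ifP => // /and4P [j_lt k_lt njk Hb] /Some_inj <-.
  pose j' := Ordinal j_lt; pose k' := Ordinal k_lt.
  have slice_cell r s :
      A (decode (set_nth2 c j k r s)) = slice A (decode c) j' k' (inord r) (inord s).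
    by rewrite /set_nth2 (decode_set_nth _ k') (decode_set_nth _ j').
  have Hds : doubly_stochastic (slice A (decode c) j' k') by apply: slice_doubly_stochastic.
  case uv_pos: (cell_pos (set_nth2 c j k u v)); last by rewrite /= /litv uv_pos.
  have [|r [s [rR sC rs_pos]]] := block_ok_pos Hds Hb.
    by rewrite -slice_cell.
  apply/hasP; exists (true, set_nth2 c j k r s).
    by rewrite inE; apply/orP; right; apply/allpairsP; exists (r, s).
  by rewrite /litv /cell_pos /= slice_cell rs_pos.
- case: ifP => // Hls /Some_inj <-; apply/hasPn => Hn.
  apply: (no_pos_transversal Hls) => i; apply/negPn/negP => i_pos.
  have /Hn : (false, [seq nth 0%N l i | l <- iota 0 4 :: ls]) \in
      [seq (false, [seq nth 0%N l i | l <- iota 0 4 :: ls]) | i <- iota 0 4].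
    by apply: (map_f (fun i : nat => (false, [seq nth 0%N l i | l <- iota 0 4 :: ls])));
       rewrite mem_iota add0n ltn_ord.
  by rewrite /litv /cell_pos /= (negbTE i_pos).
- by case: ifP => // c_unit /Some_inj <-; rewrite /= /litv /cell_pos units_pos.
Qed.

Lemma certificate_sound ins steps :
  ~~ certificate_ok (clause_of d units diag_ok) ins (decode_steps d steps).
Proof. exact/certificate_ok_sound/clause_of_sound. Qed.

End CertificateSoundness.

Definition diag2_ok (v0 : nat) (ls : seq (seq nat)) :=
  if ls is [:: l] then perm_eq l (iota 0 4) && (nth 0 l 0 == v0)%N else false.


Definition cert2_clauses0 : seq clause_spec := [::
  CUnit [:: 0; 0];
  CBlock 0 1 [::] [:: 1; 2] [:: 1; 2] 0 0;
  CBlock 0 1 [::] [:: 2; 3] [:: 0; 1] 1 3;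
  CDiag [:: [:: 0; 3; 2; 1]];
  CBlock 0 1 [::] [:: 3] [:: 1; 2; 3] 0 0;
  CBlock 0 1 [::] [:: 2; 3] [:: 1; 3] 0 0;
  CDiag [:: [:: 0; 1; 3; 2]];
  CDiag [:: [:: 0; 1; 2; 3]];
  CBlock 0 1 [::] [:: 0; 2] [:: 1; 2] 3 3;
  CBlock 0 1 [::] [:: 0; 1; 3] [:: 2] 2 1;
  CDiag [:: [:: 0; 3; 1; 2]];
  CBlock 0 1 [::] [:: 1] [:: 1; 2; 3] 0 0;
  CBlock 0 1 [::] [:: 1; 2] [:: 2; 3] 0 0;
  CBlock 0 1 [::] [:: 1; 2; 3] [:: 3] 0 0;
  CDiag [:: [:: 0; 2; 3; 1]];
  CBlock 0 1 [::] [:: 0; 3] [:: 1; 2] 2 3;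
  CBlock 0 1 [::] [:: 2; 3] [:: 2; 3] 1 1;
  CBlock 0 1 [::] [:: 0; 3] [:: 1; 2] 1 3;
  CBlock 0 1 [::] [:: 0; 2; 3] [:: 2] 1 3;
  CDiag [:: [:: 0; 2; 1; 3]];
  CBlock 0 1 [::] [:: 1; 3] [:: 1; 3] 0 0;
  CBlock 0 1 [::] [:: 0; 2; 3] [:: 1] 1 2;
  CBlock 0 1 [::] [:: 2] [:: 1; 2; 3] 0 0;
  CBlock 0 1 [::] [:: 1; 2] [:: 1; 3] 0 0;
  CBlock 0 1 [::] [:: 0; 1; 2] [:: 2] 3 1;
  CBlock 0 1 [::] [:: 1; 3] [:: 2; 3] 0 0;
  CBlock 0 1 [::] [:: 0; 1] [:: 1; 2] 3 0;
  CBlock 0 1 [::] [:: 0; 1] [:: 1; 2] 2 0;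
  CBlock 0 1 [::] [:: 1; 2; 3] [:: 1] 0 2;
  CBlock 0 1 [::] [:: 1; 2; 3] [:: 2] 0 0;
  CBlock 0 1 [::] [:: 1; 2; 3] [:: 3] 0 2;
  CBlock 0 1 [::] [:: 1; 3] [:: 1; 2] 0 0;
  CBlock 0 1 [::] [:: 2; 3] [:: 2; 3] 0 0;
  CBlock 0 1 [::] [:: 0; 1; 3] [:: 1] 2 3;
  CBlock 0 1 [::] [:: 1; 2; 3] [:: 3] 0 1;
  CBlock 0 1 [::] [:: 2; 3] [:: 1; 2] 0 0;
  CBlock 0 1 [::] [:: 2; 3] [:: 1; 3] 1 2;
  CBlock 0 1 [::] [:: 1; 2; 3] [:: 1] 0 0;
  CBlock 0 1 [::] [:: 1; 3] [:: 2; 3] 0 1].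

Definition cert2_steps0 : seq (seq nat * seq nat) := [::
  ([:: 12; 18; 10; 6; 4; 27], [:: 0; 1; 2; 3]);
  ([:: 30; 14; 12; 11], [:: 0; 4; 5; 6]);
  ([:: 31; 11; 12; 16; 8], [:: 0; 7; 8]);
  ([:: 12; 14; 8; 16; 11], [:: 40; 41]);
  ([:: 18; 16; 13], [:: 0; 9; 10; 11; 6; 12; 13; 7]);
  ([:: 29; 19; 11; 16; 8], [:: 0; 14; 6; 15]);
  ([:: 11; 19; 13; 30; 16; 8], [:: 0; 44; 13; 10; 16; 17; 3]);
  ([:: 15; 19; 30; 13; 16], [:: 0; 14; 13; 3; 10; 18]);
  ([:: 13; 8; 16], [:: 0; 43; 19; 45; 46; 4; 20; 10]);
  ([:: 19; 8; 12], [:: 0; 21; 14; 22; 3; 23; 13; 7]);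
  ([:: 11; 8; 12; 16; 18], [:: 0; 42; 41; 24; 3; 25; 13; 6]);
  ([:: 16; 8], [:: 0; 47; 48; 49; 26; 27; 11; 39]);
  ([:: 10; 17; 12; 18], [:: 0; 28; 1; 11; 3]);
  ([:: 20; 12; 18; 11], [:: 0; 22; 29; 6]);
  ([:: 12; 8; 17], [:: 0; 48; 51; 52; 7; 40; 3; 30; 25; 6]);
  ([:: 30; 17; 26; 18; 11], [:: 0; 30; 25; 6]);
  ([:: 26; 17; 18; 11], [:: 0; 54; 7; 12; 29; 6]);
  ([:: 11; 17; 13; 18], [:: 0; 55; 10; 29; 3; 7; 4]);
  ([:: 18; 17; 13], [:: 0; 56; 11; 10; 31; 29; 3]);
  ([:: 27; 13; 19; 30], [:: 0; 10; 4; 14; 3; 32]);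
  ([:: 8], [:: 0; 50; 53; 57; 19; 58; 30; 14; 33; 4; 6]);
  ([:: 13; 19], [:: 0; 59; 19; 58; 34; 14; 20; 4; 6]);
  ([:: 28; 26; 12; 11], [:: 0; 59; 34; 22; 7]);
  ([:: 29; 19; 12; 11], [:: 0; 6; 14; 40; 35; 7]);
  ([:: 11; 12; 19], [:: 0; 62; 61; 22; 7; 3; 36]);
  ([:: 19], [:: 0; 60; 63; 37; 14; 22; 23; 3]);
  ([:: 10; 12], [:: 0; 64; 1; 11; 37; 3]);
  ([:: 12], [:: 0; 59; 64; 65; 52; 7; 40; 3; 34; 38; 6]);
  ([::], [:: 64; 66; 43; 57])].

Definition cert2_clauses1 : seq clause_spec := [::
  CUnit [:: 0; 1];
  CBlock 0 1 [::] [:: 1; 2] [:: 0; 3] 0 1;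
  CBlock 0 1 [::] [:: 0; 2; 3] [:: 0] 1 2;
  CDiag [:: [:: 1; 2; 3; 0]];
  CBlock 0 1 [::] [:: 0; 3] [:: 0; 2] 1 3;
  CBlock 0 1 [::] [:: 0; 2; 3] [:: 2] 1 3;
  CDiag [:: [:: 1; 3; 2; 0]];
  CDiag [:: [:: 1; 3; 0; 2]];
  CBlock 0 1 [::] [:: 0; 2] [:: 0; 2] 1 3;
  CBlock 0 1 [::] [:: 0; 2; 3] [:: 0] 1 3;
  CBlock 0 1 [::] [:: 2] [:: 0; 2; 3] 0 1;
  CBlock 0 1 [::] [:: 1; 2; 3] [:: 3] 0 1;
  CDiag [:: [:: 1; 0; 2; 3]];
  CBlock 0 1 [::] [:: 1; 3] [:: 2; 3] 0 1;
  CDiag [:: [:: 1; 0; 3; 2]];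
  CBlock 0 1 [::] [:: 1] [:: 0; 2; 3] 0 1;
  CBlock 0 1 [::] [:: 0; 1; 2] [:: 2] 3 3;
  CDiag [:: [:: 1; 2; 0; 3]];
  CBlock 0 1 [::] [:: 0; 1; 3] [:: 0] 2 3;
  CBlock 0 1 [::] [:: 0; 3] [:: 0; 2] 2 3;
  CBlock 0 1 [::] [:: 1; 2; 3] [:: 3] 0 2;
  CBlock 0 1 [::] [:: 1; 3] [:: 0; 3] 0 2;
  CBlock 0 1 [::] [:: 3] [:: 0; 2; 3] 0 1;
  CBlock 0 1 [::] [:: 1; 2; 3] [:: 2] 0 1;
  CBlock 0 1 [::] [:: 1; 2] [:: 2; 3] 0 1;
  CBlock 0 1 [::] [:: 0; 1; 3] [:: 0] 2 2;
  CBlock 0 1 [::] [:: 0; 1; 2] [:: 0] 3 2;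
  CBlock 0 1 [::] [:: 2; 3] [:: 2; 3] 0 1;
  CBlock 0 1 [::] [:: 2; 3] [:: 2; 3] 0 0;
  CBlock 0 1 [::] [:: 2; 3] [:: 0; 2] 0 1;
  CBlock 0 1 [::] [:: 1; 2; 3] [:: 0] 0 1;
  CBlock 0 1 [::] [:: 2; 3] [:: 0; 3] 1 2;
  CBlock 0 1 [::] [:: 2; 3] [:: 0; 3] 0 1;
  CBlock 0 1 [::] [:: 1; 2] [:: 0; 2] 0 1;
  CBlock 0 1 [::] [:: 1; 2; 3] [:: 2] 0 0;
  CBlock 0 1 [::] [:: 1; 3] [:: 0; 2] 0 1;
  CBlock 0 1 [::] [:: 1; 2] [:: 2; 3] 0 0;
  CBlock 0 1 [::] [:: 1; 2; 3] [:: 3] 0 0;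
  CBlock 0 1 [::] [:: 1; 3] [:: 0; 3] 0 1].

Definition cert2_steps1 : seq (seq nat * seq nat) := [::
  ([:: 4; 26; 2; 0; 19], [:: 0; 1; 2; 3]);
  ([:: 22; 0; 16; 27], [:: 0; 4; 5; 6]);
  ([:: 27; 16; 0], [:: 0; 40; 7; 8; 9; 6]);
  ([:: 19; 0; 4; 26], [:: 0; 39; 2; 3; 10; 11; 12]);
  ([:: 30; 26; 18; 3], [:: 0; 11; 13; 14]);
  ([:: 18; 26; 16], [:: 0; 15; 43; 16; 12]);
  ([:: 16; 0], [:: 0; 41; 44; 42; 17; 11; 3; 18; 19; 14]);
  ([:: 19; 0; 26; 17], [:: 0; 42; 17; 20; 3; 21; 22; 14]);
  ([:: 26; 17; 0], [:: 0; 46; 15; 43; 12; 23; 24; 14]);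
  ([:: 22; 18; 27; 0], [:: 0; 23; 6; 25; 22; 12]);
  ([:: 23; 0; 27], [:: 0; 7; 26; 14; 9; 10; 6]);
  ([:: 4; 0; 19; 27], [:: 0; 2; 3; 6; 10]);
  ([:: 0], [:: 0; 45; 47; 49; 48; 50; 17; 22; 6; 3; 27]);
  ([:: 5; 19; 27], [:: 0; 51; 7; 17; 22; 3; 6; 28]);
  ([:: 7; 27; 19; 4], [:: 0; 6; 3; 10]);
  ([:: 20; 4; 6; 3], [:: 0; 10; 29; 14]);
  ([:: 19; 27], [:: 0; 52; 53; 30; 54; 12; 31; 22; 14]);
  ([:: 6; 4], [:: 0; 30; 54; 12; 22; 32; 14]);
  ([:: 4; 27; 18], [:: 0; 51; 56; 6; 33; 34; 10; 14]);
  ([:: 27], [:: 0; 51; 55; 57; 7; 34; 6; 22; 35; 12]);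
  ([:: 18], [:: 0; 51; 58; 15; 43; 12; 36; 23; 14]);
  ([:: 30], [:: 0; 51; 58; 59; 37; 3; 38; 22; 14]);
  ([::], [:: 0; 58; 59; 60; 17; 56; 3; 10; 1; 12])].

Definition cert2_clauses2 : seq clause_spec := [::
  CUnit [:: 0; 2];
  CBlock 0 1 [::] [:: 1; 2] [:: 0; 3] 0 2;
  CBlock 0 1 [::] [:: 0; 2; 3] [:: 0] 1 1;
  CDiag [:: [:: 2; 1; 3; 0]];
  CBlock 0 1 [::] [:: 0; 3] [:: 0; 1] 1 3;
  CBlock 0 1 [::] [:: 0; 2; 3] [:: 1] 1 3;
  CDiag [:: [:: 2; 3; 1; 0]];
  CDiag [:: [:: 2; 3; 0; 1]];
  CBlock 0 1 [::] [:: 0; 2] [:: 0; 1] 1 3;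
  CBlock 0 1 [::] [:: 0; 2; 3] [:: 0] 1 3;
  CBlock 0 1 [::] [:: 2] [:: 0; 1; 3] 0 2;
  CBlock 0 1 [::] [:: 1; 2; 3] [:: 3] 0 2;
  CDiag [:: [:: 2; 0; 1; 3]];
  CBlock 0 1 [::] [:: 1; 3] [:: 1; 3] 0 2;
  CDiag [:: [:: 2; 0; 3; 1]];
  CBlock 0 1 [::] [:: 1] [:: 0; 1; 3] 0 2;
  CBlock 0 1 [::] [:: 0; 1; 2] [:: 1] 3 3;
  CDiag [:: [:: 2; 1; 0; 3]];
  CBlock 0 1 [::] [:: 0; 1; 3] [:: 0] 2 3;
  CBlock 0 1 [::] [:: 0; 3] [:: 0; 1] 2 3;
  CBlock 0 1 [::] [:: 1; 2; 3] [:: 3] 0 1;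
  CBlock 0 1 [::] [:: 1; 3] [:: 0; 3] 0 1;
  CBlock 0 1 [::] [:: 3] [:: 0; 1; 3] 0 2;
  CBlock 0 1 [::] [:: 1; 2; 3] [:: 1] 0 2;
  CBlock 0 1 [::] [:: 1; 2] [:: 1; 3] 0 2;
  CBlock 0 1 [::] [:: 0; 1; 3] [:: 0] 2 1;
  CBlock 0 1 [::] [:: 0; 1; 2] [:: 0] 3 1;
  CBlock 0 1 [::] [:: 2; 3] [:: 1; 3] 0 2;
  CBlock 0 1 [::] [:: 2; 3] [:: 1; 3] 0 0;
  CBlock 0 1 [::] [:: 2; 3] [:: 0; 1] 0 2;
  CBlock 0 1 [::] [:: 1; 2; 3] [:: 0] 0 2;
  CBlock 0 1 [::] [:: 2; 3] [:: 0; 3] 1 1;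
  CBlock 0 1 [::] [:: 2; 3] [:: 0; 3] 0 2;
  CBlock 0 1 [::] [:: 1; 2] [:: 0; 1] 0 2;
  CBlock 0 1 [::] [:: 1; 2; 3] [:: 1] 0 0;
  CBlock 0 1 [::] [:: 1; 3] [:: 0; 1] 0 2;
  CBlock 0 1 [::] [:: 1; 2] [:: 1; 3] 0 0;
  CBlock 0 1 [::] [:: 1; 2; 3] [:: 3] 0 0;
  CBlock 0 1 [::] [:: 1; 3] [:: 0; 3] 0 2].

Definition cert2_steps2 : seq (seq nat * seq nat) := [::
  ([:: 4; 26; 2; 0; 11], [:: 0; 1; 2; 3]);
  ([:: 14; 0; 8; 27], [:: 0; 4; 5; 6]);
  ([:: 27; 8; 0], [:: 0; 40; 7; 8; 9; 6]);
  ([:: 11; 0; 4; 26], [:: 0; 39; 2; 3; 10; 11; 12]);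
  ([:: 30; 26; 10; 3], [:: 0; 11; 13; 14]);
  ([:: 10; 26; 8], [:: 0; 15; 43; 16; 12]);
  ([:: 8; 0], [:: 0; 41; 44; 42; 17; 11; 3; 18; 19; 14]);
  ([:: 11; 0; 26; 9], [:: 0; 42; 17; 20; 3; 21; 22; 14]);
  ([:: 26; 9; 0], [:: 0; 46; 15; 43; 12; 23; 24; 14]);
  ([:: 14; 10; 27; 0], [:: 0; 23; 6; 25; 22; 12]);
  ([:: 15; 0; 27], [:: 0; 7; 26; 14; 9; 10; 6]);
  ([:: 4; 0; 11; 27], [:: 0; 2; 3; 6; 10]);
  ([:: 0], [:: 0; 45; 47; 49; 48; 50; 17; 22; 6; 3; 27]);
  ([:: 5; 11; 27], [:: 0; 51; 7; 17; 22; 3; 6; 28]);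
  ([:: 7; 27; 11; 4], [:: 0; 6; 3; 10]);
  ([:: 12; 6; 4; 3], [:: 0; 29; 10; 14]);
  ([:: 11; 27], [:: 0; 52; 53; 30; 54; 12; 31; 22; 14]);
  ([:: 6; 4], [:: 0; 30; 54; 12; 22; 32; 14]);
  ([:: 4; 27; 10], [:: 0; 51; 56; 6; 33; 34; 10; 14]);
  ([:: 27], [:: 0; 51; 55; 57; 7; 34; 6; 22; 35; 12]);
  ([:: 10], [:: 0; 51; 58; 15; 43; 12; 36; 23; 14]);
  ([:: 30], [:: 0; 51; 58; 59; 37; 3; 38; 22; 14]);
  ([::], [:: 0; 58; 59; 60; 17; 56; 3; 10; 1; 12])].

Definition cert2_clauses3 : seq clause_spec := [::
  CUnit [:: 0; 3];
  CBlock 0 1 [::] [:: 1; 2] [:: 0; 1] 0 3;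
  CBlock 0 1 [::] [:: 0; 2; 3] [:: 0] 1 2;
  CDiag [:: [:: 3; 2; 1; 0]];
  CBlock 0 1 [::] [:: 1] [:: 0; 1; 2] 0 3;
  CBlock 0 1 [::] [:: 1; 3] [:: 1; 3] 2 0;
  CDiag [:: [:: 3; 2; 0; 1]];
  CDiag [:: [:: 3; 1; 0; 2]];
  CBlock 0 1 [::] [:: 0; 3] [:: 1; 2] 2 0;
  CBlock 0 1 [::] [:: 2] [:: 0; 1; 3] 1 2;
  CBlock 0 1 [::] [:: 2; 3] [:: 0; 3] 1 1;
  CBlock 0 1 [::] [:: 2] [:: 0; 1; 2] 0 3;
  CBlock 0 1 [::] [:: 0; 2; 3] [:: 0] 1 1;
  CDiag [:: [:: 3; 1; 2; 0]];
  CBlock 0 1 [::] [:: 0; 1] [:: 0; 2] 2 1;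
  CBlock 0 1 [::] [:: 0; 1] [:: 0; 2] 3 1;
  CBlock 0 1 [::] [:: 3] [:: 1; 2; 3] 2 0;
  CBlock 0 1 [::] [:: 0; 1; 3] [:: 2] 2 0;
  CBlock 0 1 [::] [:: 1; 3] [:: 2; 3] 2 1;
  CDiag [:: [:: 3; 0; 1; 2]];
  CBlock 0 1 [::] [:: 3] [:: 0; 2; 3] 2 1;
  CBlock 0 1 [::] [:: 1; 2; 3] [:: 1] 0 3;
  CDiag [:: [:: 3; 0; 2; 1]];
  CBlock 0 1 [::] [:: 1] [:: 1; 2; 3] 3 0;
  CBlock 0 1 [::] [:: 0] [:: 0; 1; 2] 1 3;
  CBlock 0 1 [::] [:: 0] [:: 0; 1; 2] 2 3;
  CBlock 0 1 [::] [:: 0] [:: 0; 1; 2] 3 3;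
  CBlock 0 1 [::] [:: 0; 2] [:: 1; 2] 1 0;
  CBlock 0 1 [::] [:: 0; 2; 3] [:: 1] 1 0;
  CBlock 0 1 [::] [:: 1; 2] [:: 1; 2] 0 3;
  CBlock 0 1 [::] [:: 1; 2; 3] [:: 1] 0 2;
  CBlock 0 1 [::] [:: 0; 1; 2] [:: 1] 3 0;
  CBlock 0 1 [::] [:: 0; 1; 2] [:: 1] 3 2;
  CBlock 0 1 [::] [:: 1; 3] [:: 0; 2] 0 3;
  CBlock 0 1 [::] [:: 1; 2; 3] [:: 0] 0 3;
  CBlock 0 1 [::] [:: 0; 1; 3] [:: 0] 2 1;
  CBlock 0 1 [::] [:: 3] [:: 0; 1; 2] 0 3;
  CBlock 0 1 [::] [:: 1; 3] [:: 1; 2] 0 3;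
  CBlock 0 1 [::] [:: 1; 2; 3] [:: 2] 0 3;
  CBlock 0 1 [::] [:: 0; 3] [:: 0; 1] 2 2;
  CBlock 0 1 [::] [:: 1; 2] [:: 0; 2] 0 3;
  CBlock 0 1 [::] [:: 0; 1; 2] [:: 0] 3 2;
  CBlock 0 1 [::] [:: 0; 2; 3] [:: 1] 1 2;
  CBlock 0 1 [::] [:: 0; 1; 3] [:: 0] 2 2;
  CBlock 0 1 [::] [:: 1; 3] [:: 0; 2] 0 1;
  CBlock 0 1 [::] [:: 0; 1; 2] [:: 0] 3 1;
  CBlock 0 1 [::] [:: 2; 3] [:: 1; 2] 0 3;
  CBlock 0 1 [::] [:: 1; 2] [:: 0; 2] 0 1;
  CBlock 0 1 [::] [:: 1; 2; 3] [:: 2] 0 1;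
  CBlock 0 1 [::] [:: 1; 3] [:: 1; 2] 0 0;
  CBlock 0 1 [::] [:: 1; 2; 3] [:: 2] 0 0;
  CBlock 0 1 [::] [:: 2; 3] [:: 0; 2] 0 3;
  CBlock 0 1 [::] [:: 1; 3] [:: 0; 1] 0 3;
  CBlock 0 1 [::] [:: 2; 3] [:: 1; 2] 0 0;
  CBlock 0 1 [::] [:: 2; 3] [:: 0; 1] 0 3;
  CBlock 0 1 [::] [:: 1; 2; 3] [:: 1] 0 0].

Definition cert2_steps3 : seq (seq nat * seq nat) := [::
  ([:: 4; 10; 2; 0; 19], [:: 0; 1; 2; 3]);
  ([:: 10; 0; 2; 30; 26], [:: 0; 4; 56; 5; 6]);
  ([:: 5; 19; 11; 16; 8], [:: 0; 6; 7; 8]);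
  ([:: 19; 8; 16; 30; 11; 28], [:: 0; 58; 9; 10; 3]);
  ([:: 4; 12; 0; 11], [:: 0; 11; 12; 13]);
  ([:: 2; 26; 28; 8; 16; 0; 30], [:: 0; 57; 59; 14; 15; 60; 16; 7]);
  ([:: 5; 11; 18; 16], [:: 0; 7; 17]);
  ([:: 11; 28; 8; 16; 0; 30; 26; 3], [:: 0; 59; 62; 60; 18; 19]);
  ([:: 13; 30; 6; 3], [:: 0; 20; 19]);
  ([:: 12; 4; 10; 3], [:: 0; 11; 21; 22]);
  ([:: 13; 3; 30; 10; 26], [:: 0; 64; 23; 3]);
  ([:: 16; 0; 8], [:: 0; 24; 25; 26; 61; 63; 66; 27; 28; 22]);
  ([:: 3; 12; 10; 15], [:: 0; 22; 65; 29; 6]);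
  ([:: 12; 17; 8; 10], [:: 0; 30; 31; 32; 68; 33; 34; 6]);
  ([:: 2; 10; 0; 13], [:: 0; 4; 35; 3]);
  ([:: 19; 13; 0; 22], [:: 0; 3; 2; 36; 6]);
  ([:: 10; 17; 8; 0], [:: 0; 69; 70; 19; 71; 37; 38; 22]);
  ([:: 3; 13; 18; 11; 8; 0], [:: 0; 19; 38; 13; 22; 39]);
  ([:: 18; 8; 13; 0; 11], [:: 0; 73; 35; 13; 40; 38; 7]);
  ([:: 13; 8; 11; 0], [:: 0; 74; 71; 19; 7; 41]);
  ([:: 19; 5; 12; 8], [:: 0; 6; 42]);
  ([:: 8; 0], [:: 0; 67; 72; 75; 60; 7; 76; 38; 13; 39; 43; 22]);
  ([:: 11; 12; 0; 18; 9], [:: 0; 60; 7; 38; 13; 44; 36; 22]);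
  ([:: 18; 9; 0; 12], [:: 0; 78; 21; 68; 4]);
  ([:: 10; 12; 19; 0], [:: 0; 21; 68; 6; 45]);
  ([:: 12; 9; 0], [:: 0; 79; 80; 60; 6; 7; 46; 36; 13]);
  ([:: 19; 0; 13], [:: 0; 3; 71; 35; 19]);
  ([:: 3; 13; 18; 11], [:: 0; 19; 38; 22; 13; 36]);
  ([:: 11; 13; 0; 18; 9], [:: 0; 83; 35; 13; 47; 48; 7]);
  ([:: 0], [:: 0; 77; 81; 82; 84; 4; 19; 37; 48; 22]);
  ([:: 10; 13; 18], [:: 0; 85; 4; 19; 49; 50; 22]);
  ([:: 22; 2; 18; 11], [:: 0; 33; 38; 13]);
  ([:: 18; 13], [:: 0; 86; 83; 87; 7; 40; 34; 13]);
  ([:: 5; 19; 11; 6], [:: 0; 6; 7; 36]);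
  ([:: 4; 13; 6], [:: 0; 34; 19; 51; 36; 22]);
  ([:: 13], [:: 0; 88; 3; 90; 89; 6; 52; 36; 19]);
  ([:: 10; 19], [:: 0; 91; 21; 6; 68; 1]);
  ([:: 4; 2; 11], [:: 0; 91; 34; 11; 13]);
  ([:: 5; 19; 11], [:: 0; 85; 91; 7; 6; 89; 53; 13]);
  ([:: 19], [:: 0; 91; 92; 94; 93; 11; 13; 22; 54]);
  ([:: 4; 3; 11], [:: 0; 91; 11; 22; 13; 54]);
  ([:: 3; 11], [:: 0; 95; 96; 7; 38; 13; 22; 36]);
  ([:: 11], [:: 0; 95; 97; 87; 93; 7]);
  ([::], [:: 0; 85; 91; 95; 98; 4; 68; 55])].

Definition cert2 (v0 : nat) : seq clause_spec * seq (seq nat * seq nat) :=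
  nth ([::], [::]) [:: (cert2_clauses0, cert2_steps0); (cert2_clauses1, cert2_steps1);
                       (cert2_clauses2, cert2_steps2); (cert2_clauses3, cert2_steps3)] v0.

Lemma cert2_ok (v0 : 'I_4) :
  certificate_ok (clause_of 2 [:: [:: 0; nat_of_ord v0]]%N (diag2_ok v0)) (cert2 v0).1
    (decode_steps 2 (cert2 v0).2).
Proof. by case: v0 => [[|[|[|[|]]]] //] _; vm_compute. Qed.

Lemma doubly_stochastic4_diagonal_through (R : numDomainType) (f : 'I_4 -> 'I_4 -> R) v0 :
  doubly_stochastic f -> 0 < f ord0 v0 ->
  exists s : {perm 'I_4}, s ord0 = v0 /\ forall i, 0 < f i (s i).
Proof.
move=> Hf f0v0; pose B : mdmatrix R 2 4 := fun a => f (a ord0) (a ord_max).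
have B_poly : polystochastic B.
  have [f0 Hr Hc] := Hf; split=> [a|k a]; first exact: f0.
  rewrite sum_line /B; case: k => -[|[|//]] k_lt.
  - by under eq_bigr do rewrite !ffunE /=; apply: Hc.
  - by under eq_bigr do rewrite !ffunE /=; apply: Hr.
case: (boolP [exists s : {perm 'I_4}, (s ord0 == v0) && [forall i, 0 < f i (s i)]]).
  by case/existsP => s /andP [/eqP s0 /forallP s_pos]; exists s.
move=> no_diag; exfalso; apply: (negP (certificate_sound B_poly _ _ _ _) (cert2_ok v0)).
  by move=> c; rewrite inE => /eqP ->; rewrite /B !ffunE /= inord_val inord0.
move=> [|l [|//]] //= /andP [Hl /eqP l0] l_pos; apply: (negP no_diag).
apply/existsP; exists (perm (nth_ord_inj Hl)); rewrite permE /nth_ord l0 inord_val eqxx /=.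
apply/forallP => i; rewrite permE; have := l_pos i.
by rewrite /B !transversalE /= nth_ord_iota.
Qed.

Definition units4 : seq (seq nat) :=
  flatten [seq [:: [:: i; i; 0; 0]; [:: 0; i; i; 0]; [:: 0; 0; i; i]]%N | i <- iota 0 4].

Lemma normalize4 (R : numDomainType) (A : mdmatrix R 4 4) : polystochastic A ->
  exists g : 'I_4 -> {perm 'I_4}, forall c, c \in units4 -> 0 < A (relab g (decode c)).
Proof.
move=> HA; have [A0 Aline] := HA.
pose b0 : index 4 4 := [ffun _ => ord0].
have [v0 /andP [_ v0_pos]] : exists v0, true && (0 < A (upd b0 1 v0)).
  by apply: psumr_neq0P => [t _ //|]; rewrite -sum_line Aline; apply/eqP; rewrite oner_neq0.
have f1_pos : 0 < slice A b0 ord0 1 ord0 v0 by rewrite /slice (@upd_id _ _ b0) ?ffunE.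
have [s1 [s10 s1_pos]] := doubly_stochastic4_diagonal_through
  (slice_doubly_stochastic b0 HA (isT : ord0 != 1 :> 'I_4)) f1_pos.
have f2_pos : 0 < slice A b0 1 2 (s1 ord0) ord0 by rewrite /slice s10 upd_id ?ffunE.
have [s2 [s20 s2_pos]] := doubly_stochastic4_diagonal_through
  (doubly_stochastic_perml s1 (slice_doubly_stochastic b0 HA (isT : 1 != 2 :> 'I_4))) f2_pos.
pose b1 := upd b0 1 v0.
have f3_pos : 0 < slice A b1 2 3 (s2 ord0) ord0.
  by rewrite /slice s20 (@upd_id _ _ b1 2) ?ffunE // (@upd_id _ _ b1 3) ?ffunE.
have [s3 [s30 s3_pos]] := doubly_stochastic4_diagonal_through
  (doubly_stochastic_perml s2 (slice_doubly_stochastic b1 HA (isT : 2 != 3 :> 'I_4)))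
  f3_pos.
(* [g = (1, s1, s2, s3)] sends (i,i,0,0), (0,i,i,0), (0,0,i,i) to
   (i, s1 i, 0, 0), (0, s1 i, s2 i, 0), (0, v0, s2 i, s3 i). *)
pose g (k : 'I_4) := nth 1%g [:: 1%g; s1; s2; s3] k; exists g.
move=> c /flatten_mapP [i0 _]; set i : 'I_4 := inord i0.
rewrite !inE => /or3P [] /eqP ->.
- suff -> : relab g (decode [:: i0; i0; 0; 0]%N) = upd (upd b0 ord0 i) 1 (s1 i) by apply: s1_pos.
  by apply/ffunP => -[[|[|[|[|//]]]] k_lt]; rewrite !ffunE /g /= ?perm1 ?inord0 ?s20 ?s30.
- suff -> : relab g (decode [:: 0; i0; i0; 0]%N) = upd (upd b0 1 (s1 i)) 2 (s2 i) by apply: s2_pos.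
  by apply/ffunP => -[[|[|[|[|//]]]] k_lt]; rewrite !ffunE /g /= ?perm1 ?inord0 ?s20 ?s30.
- suff -> : relab g (decode [:: 0; 0; i0; i0]%N) = upd (upd b1 2 (s2 i)) 3 (s3 i) by apply: s3_pos.
  by apply/ffunP => -[[|[|[|[|//]]]] k_lt]; rewrite !ffunE /g /= ?perm1 ?inord0 ?s10 ?s20 ?s30.
Qed.

Definition diag4_ok (ls : seq (seq nat)) := (size ls == 3)%N && all (perm_eq^~ (iota 0 4)) ls.

Definition cert4_clauses : seq clause_spec := [::
  CUnit [:: 0; 1; 1; 0];
  CUnit [:: 0; 0; 3; 3];
  CDiag [:: [:: 1; 3; 2; 0]; [:: 1; 0; 3; 2]; [:: 0; 2; 1; 3]];
  CDiag [:: [:: 0; 3; 2; 1]; [:: 3; 0; 1; 2]; [:: 3; 2; 1; 0]];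
  CBlock 1 2 [:: 2; 0; 0; 1] [:: 2] [:: 0; 1; 3] 0 2;
  CUnit [:: 2; 2; 0; 0];
  CUnit [:: 3; 3; 0; 0];
  CBlock 2 3 [:: 2; 2; 0; 0] [:: 3] [:: 1; 2; 3] 0 0;
  CBlock 2 3 [:: 2; 2; 0; 0] [:: 1; 2; 3] [:: 3] 0 0;
  CBlock 0 1 [:: 0; 0; 3; 2] [:: 0] [:: 0; 1; 3] 2 2;
  CDiag [:: [:: 0; 3; 2; 1]; [:: 2; 1; 3; 0]; [:: 1; 0; 2; 3]];
  CDiag [:: [:: 3; 0; 2; 1]; [:: 2; 1; 3; 0]; [:: 1; 0; 2; 3]];
  CDiag [:: [:: 1; 0; 2; 3]; [:: 3; 2; 1; 0]; [:: 2; 1; 3; 0]];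
  CDiag [:: [:: 1; 0; 2; 3]; [:: 3; 1; 2; 0]; [:: 2; 3; 1; 0]];
  CBlock 0 1 [:: 0; 0; 2; 1] [:: 0; 1] [:: 0; 3] 2 2;
  CBlock 0 1 [:: 0; 0; 1; 3] [:: 0; 1; 3] [:: 0] 2 2;
  CDiag [:: [:: 1; 3; 2; 0]; [:: 3; 2; 0; 1]; [:: 2; 1; 0; 3]];
  CUnit [:: 0; 0; 0; 0];
  CUnit [:: 1; 1; 0; 0];
  CUnit [:: 0; 0; 1; 1];
  CUnit [:: 0; 0; 2; 2];
  CDiag [:: [:: 0; 1; 2; 3]; [:: 2; 0; 3; 1]; [:: 2; 0; 3; 1]];
  CDiag [:: [:: 0; 1; 2; 3]; [:: 1; 2; 3; 0]; [:: 1; 2; 3; 0]];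
  CBlock 0 3 [:: 0; 3; 1; 0] [:: 3] [:: 1; 2; 3] 1 0;
  CBlock 2 3 [:: 1; 1; 0; 0] [:: 1; 2; 3] [:: 2] 0 0;
  CDiag [:: [:: 0; 1; 2; 3]; [:: 0; 3; 2; 1]; [:: 0; 2; 1; 3]];
  CDiag [:: [:: 3; 0; 2; 1]; [:: 3; 1; 2; 0]; [:: 2; 0; 1; 3]];
  CDiag [:: [:: 0; 3; 2; 1]; [:: 1; 0; 2; 3]; [:: 1; 2; 3; 0]];
  CDiag [:: [:: 0; 3; 2; 1]; [:: 1; 0; 2; 3]; [:: 3; 2; 1; 0]];
  CBlock 0 3 [:: 0; 0; 1; 0] [:: 1] [:: 0; 2; 3] 0 1;
  CDiag [:: [:: 1; 0; 2; 3]; [:: 2; 1; 3; 0]; [:: 1; 3; 2; 0]];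
  CBlock 0 1 [:: 0; 0; 2; 1] [:: 0] [:: 0; 1; 3] 2 2;
  CDiag [:: [:: 3; 1; 2; 0]; [:: 2; 0; 1; 3]; [:: 1; 0; 3; 2]];
  CDiag [:: [:: 3; 0; 2; 1]; [:: 2; 1; 0; 3]; [:: 1; 3; 0; 2]];
  CBlock 0 1 [:: 0; 0; 3; 2] [:: 0; 3] [:: 0; 1] 2 2;
  CBlock 0 3 [:: 0; 1; 2; 0] [:: 0; 1; 2] [:: 1] 3 0;
  CDiag [:: [:: 3; 1; 2; 0]; [:: 3; 0; 1; 2]; [:: 2; 0; 3; 1]];
  CBlock 0 1 [:: 0; 0; 2; 1] [:: 0; 2; 3] [:: 0] 1 1;
  CUnit [:: 0; 2; 2; 0];
  CDiag [:: [:: 0; 3; 2; 1]; [:: 2; 1; 3; 0]; [:: 2; 0; 1; 3]];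
  CDiag [:: [:: 0; 3; 2; 1]; [:: 3; 1; 2; 0]; [:: 2; 0; 1; 3]];
  CBlock 0 2 [:: 0; 1; 0; 0] [:: 3] [:: 1; 2; 3] 1 0;
  CBlock 2 3 [:: 2; 2; 0; 0] [:: 1; 3] [:: 1; 3] 0 0;
  CBlock 1 3 [:: 1; 0; 1; 0] [:: 0] [:: 1; 2; 3] 3 0;
  CBlock 1 3 [:: 1; 0; 1; 0] [:: 0; 1] [:: 2; 3] 3 0;
  CDiag [:: [:: 2; 0; 3; 1]; [:: 2; 1; 3; 0]; [:: 0; 1; 2; 3]];
  CDiag [:: [:: 0; 1; 2; 3]; [:: 0; 1; 2; 3]; [:: 0; 3; 1; 2]];
  CBlock 0 2 [:: 0; 3; 0; 2] [:: 0; 2; 3] [:: 3] 1 0;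
  CBlock 2 3 [:: 2; 2; 0; 0] [:: 2; 3] [:: 2; 3] 0 0;
  CDiag [:: [:: 0; 1; 2; 3]; [:: 3; 1; 2; 0]; [:: 3; 1; 2; 0]];
  CDiag [:: [:: 0; 1; 2; 3]; [:: 1; 3; 2; 0]; [:: 1; 3; 2; 0]];
  CDiag [:: [:: 0; 1; 2; 3]; [:: 2; 1; 3; 0]; [:: 2; 3; 1; 0]];
  CBlock 2 3 [:: 1; 1; 0; 0] [:: 1; 3] [:: 1; 3] 0 0;
  CDiag [:: [:: 0; 3; 2; 1]; [:: 3; 0; 2; 1]; [:: 3; 0; 1; 2]];
  CBlock 2 3 [:: 3; 1; 0; 0] [:: 1; 3] [:: 0; 2] 0 3;
  CBlock 2 3 [:: 3; 1; 0; 0] [:: 1] [:: 0; 1; 2] 0 3;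
  CDiag [:: [:: 0; 3; 2; 1]; [:: 1; 2; 0; 3]; [:: 1; 3; 0; 2]];
  CDiag [:: [:: 0; 3; 2; 1]; [:: 0; 1; 2; 3]; [:: 0; 3; 1; 2]];
  CDiag [:: [:: 0; 3; 2; 1]; [:: 2; 3; 0; 1]; [:: 2; 3; 0; 1]];
  CBlock 2 3 [:: 1; 3; 0; 0] [:: 1; 2; 3] [:: 3] 0 0;
  CBlock 2 3 [:: 2; 2; 0; 0] [:: 3] [:: 0; 2; 3] 2 1;
  CDiag [:: [:: 0; 3; 2; 1]; [:: 1; 2; 3; 0]; [:: 1; 2; 0; 3]];
  CDiag [:: [:: 3; 0; 2; 1]; [:: 2; 1; 3; 0]; [:: 2; 0; 1; 3]];
  CBlock 1 2 [:: 2; 0; 0; 1] [:: 0; 1; 3] [:: 2] 2 3;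
  CBlock 1 3 [:: 1; 0; 1; 0] [:: 1] [:: 1; 2; 3] 0 0;
  CBlock 0 3 [:: 0; 3; 2; 0] [:: 0; 1; 3] [:: 2] 2 1;
  CDiag [:: [:: 0; 1; 2; 3]; [:: 3; 1; 0; 2]; [:: 3; 1; 0; 2]];
  CUnit [:: 0; 3; 3; 0];
  CDiag [:: [:: 0; 3; 2; 1]; [:: 1; 2; 3; 0]; [:: 1; 0; 2; 3]];
  CBlock 0 2 [:: 0; 3; 0; 0] [:: 1] [:: 0; 1; 2] 0 3;
  CBlock 0 2 [:: 0; 3; 0; 0] [:: 1] [:: 1; 2; 3] 3 0;
  CDiag [:: [:: 0; 3; 2; 1]; [:: 1; 3; 2; 0]; [:: 1; 0; 2; 3]];
  CBlock 0 1 [:: 0; 0; 1; 2] [:: 3] [:: 0; 1; 3] 1 2;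
  CDiag [:: [:: 0; 3; 2; 1]; [:: 3; 0; 2; 1]; [:: 3; 2; 0; 1]];
  CDiag [:: [:: 1; 3; 2; 0]; [:: 3; 0; 2; 1]; [:: 3; 0; 1; 2]];
  CDiag [:: [:: 1; 3; 2; 0]; [:: 0; 3; 2; 1]; [:: 3; 0; 1; 2]];
  CDiag [:: [:: 0; 3; 2; 1]; [:: 2; 0; 1; 3]; [:: 1; 2; 3; 0]];
  CBlock 0 3 [:: 0; 2; 2; 0] [:: 2] [:: 0; 2; 3] 0 1;
  CBlock 2 3 [:: 0; 1; 0; 0] [:: 0; 2; 3] [:: 3] 1 0;
  CBlock 1 3 [:: 0; 0; 2; 0] [:: 0; 2; 3] [:: 1] 1 3;
  CBlock 1 2 [:: 1; 0; 0; 2] [:: 1] [:: 1; 2; 3] 3 0;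
  CBlock 2 3 [:: 3; 3; 0; 0] [:: 1] [:: 1; 2; 3] 0 0;
  CDiag [:: [:: 3; 0; 2; 1]; [:: 3; 1; 2; 0]; [:: 0; 2; 1; 3]];
  CBlock 1 2 [:: 1; 0; 0; 2] [:: 0; 1; 2] [:: 1] 3 0;
  CDiag [:: [:: 3; 2; 0; 1]; [:: 3; 1; 2; 0]; [:: 0; 2; 1; 3]];
  CDiag [:: [:: 0; 2; 1; 3]; [:: 3; 1; 2; 0]; [:: 3; 2; 1; 0]];
  CBlock 1 2 [:: 1; 0; 0; 0] [:: 0; 2; 3] [:: 1] 1 0;
  CBlock 1 3 [:: 1; 0; 1; 0] [:: 0; 1; 3] [:: 2] 2 0;
  CDiag [:: [:: 0; 2; 3; 1]; [:: 2; 1; 3; 0]; [:: 2; 0; 1; 3]];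
  CDiag [:: [:: 2; 3; 0; 1]; [:: 2; 1; 3; 0]; [:: 0; 2; 1; 3]];
  CBlock 1 2 [:: 2; 0; 0; 1] [:: 0; 1; 3] [:: 3] 2 2;
  CDiag [:: [:: 2; 3; 1; 0]; [:: 2; 1; 3; 0]; [:: 0; 2; 1; 3]];
  CDiag [:: [:: 2; 3; 1; 0]; [:: 2; 0; 3; 1]; [:: 0; 2; 1; 3]];
  CBlock 2 3 [:: 3; 0; 0; 0] [:: 0; 1; 3] [:: 3] 2 0;
  CBlock 0 2 [:: 0; 0; 0; 3] [:: 3] [:: 0; 2; 3] 1 1;
  CBlock 2 3 [:: 3; 0; 0; 0] [:: 0; 1; 3] [:: 3] 2 1;
  CBlock 0 3 [:: 0; 0; 2; 0] [:: 2; 3] [:: 0; 1] 0 2;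
  CBlock 0 2 [:: 0; 0; 0; 1] [:: 2; 3] [:: 2; 3] 0 1;
  CDiag [:: [:: 3; 2; 0; 1]; [:: 3; 1; 2; 0]; [:: 1; 2; 0; 3]];
  CDiag [:: [:: 2; 3; 0; 1]; [:: 3; 1; 2; 0]; [:: 1; 2; 0; 3]];
  CBlock 0 1 [:: 0; 0; 3; 1] [:: 0; 2] [:: 2; 3] 3 0;
  CDiag [:: [:: 0; 3; 2; 1]; [:: 1; 0; 3; 2]; [:: 1; 0; 2; 3]];
  CBlock 2 3 [:: 3; 1; 0; 0] [:: 0; 1; 2] [:: 3] 3 0;
  CDiag [:: [:: 0; 3; 2; 1]; [:: 0; 2; 3; 1]; [:: 0; 1; 2; 3]];
  CDiag [:: [:: 0; 3; 2; 1]; [:: 0; 3; 2; 1]; [:: 0; 2; 1; 3]];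
  CDiag [:: [:: 0; 3; 2; 1]; [:: 2; 3; 0; 1]; [:: 2; 1; 0; 3]];
  CBlock 0 3 [:: 0; 3; 3; 0] [:: 1] [:: 1; 2; 3] 0 0;
  CBlock 1 2 [:: 1; 0; 0; 1] [:: 3] [:: 0; 2; 3] 1 1;
  CBlock 0 3 [:: 0; 1; 1; 0] [:: 1; 3] [:: 1; 2] 0 0;
  CBlock 0 3 [:: 0; 1; 0; 0] [:: 3] [:: 1; 2; 3] 1 0;
  CDiag [:: [:: 0; 2; 3; 1]; [:: 3; 1; 2; 0]; [:: 3; 0; 1; 2]];
  CDiag [:: [:: 3; 0; 2; 1]; [:: 3; 2; 1; 0]; [:: 0; 1; 3; 2]];
  CDiag [:: [:: 3; 0; 2; 1]; [:: 3; 1; 2; 0]; [:: 0; 3; 1; 2]];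
  CBlock 0 1 [:: 0; 0; 2; 1] [:: 0; 1; 3] [:: 0] 2 2;
  CDiag [:: [:: 3; 1; 2; 0]; [:: 1; 0; 3; 2]; [:: 3; 0; 2; 1]];
  CDiag [:: [:: 1; 3; 2; 0]; [:: 1; 0; 3; 2]; [:: 0; 3; 2; 1]];
  CDiag [:: [:: 1; 3; 2; 0]; [:: 0; 2; 3; 1]; [:: 1; 0; 2; 3]];
  CDiag [:: [:: 3; 1; 2; 0]; [:: 2; 0; 3; 1]; [:: 1; 0; 2; 3]];
  CBlock 1 3 [:: 0; 0; 1; 0] [:: 0; 2; 3] [:: 3] 1 0;
  CBlock 0 3 [:: 0; 3; 0; 0] [:: 1] [:: 0; 1; 3] 2 2;
  CBlock 0 3 [:: 0; 1; 0; 0] [:: 0; 2; 3] [:: 1] 1 0;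
  CBlock 0 3 [:: 0; 1; 3; 0] [:: 0; 1; 2] [:: 1] 3 0;
  CBlock 0 1 [:: 0; 0; 2; 1] [:: 0; 1; 2] [:: 3] 3 0;
  CDiag [:: [:: 2; 3; 0; 1]; [:: 1; 2; 0; 3]; [:: 3; 1; 2; 0]];
  CBlock 1 3 [:: 2; 0; 0; 0] [:: 0; 2; 3] [:: 2] 1 1;
  CDiag [:: [:: 1; 3; 2; 0]; [:: 3; 2; 0; 1]; [:: 1; 0; 2; 3]];
  CDiag [:: [:: 0; 1; 2; 3]; [:: 2; 3; 1; 0]; [:: 2; 1; 3; 0]];
  CDiag [:: [:: 0; 3; 2; 1]; [:: 2; 0; 1; 3]; [:: 2; 1; 3; 0]];
  CDiag [:: [:: 0; 2; 3; 1]; [:: 2; 1; 3; 0]; [:: 2; 0; 3; 1]];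
  CDiag [:: [:: 0; 2; 3; 1]; [:: 3; 1; 2; 0]; [:: 3; 0; 2; 1]];
  CDiag [:: [:: 0; 3; 2; 1]; [:: 2; 3; 1; 0]; [:: 2; 0; 3; 1]];
  CBlock 0 1 [:: 0; 0; 3; 3] [:: 2] [:: 1; 2; 3] 0 0;
  CBlock 1 2 [:: 1; 0; 0; 0] [:: 0; 3] [:: 1; 3] 1 0;
  CBlock 2 3 [:: 1; 3; 0; 0] [:: 0; 1; 3] [:: 0] 2 2;
  CBlock 1 2 [:: 1; 0; 0; 0] [:: 3] [:: 0; 1; 3] 2 2;
  CDiag [:: [:: 0; 3; 1; 2]; [:: 1; 0; 3; 2]; [:: 1; 2; 3; 0]];
  CDiag [:: [:: 0; 2; 1; 3]; [:: 1; 2; 3; 0]; [:: 1; 2; 3; 0]];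
  CDiag [:: [:: 3; 0; 2; 1]; [:: 2; 3; 1; 0]; [:: 2; 0; 3; 1]];
  CBlock 0 1 [:: 0; 0; 2; 2] [:: 0; 1; 2] [:: 3] 3 2;
  CBlock 0 3 [:: 0; 2; 2; 0] [:: 1; 3] [:: 0; 2] 2 1;
  CDiag [:: [:: 1; 3; 2; 0]; [:: 3; 0; 1; 2]; [:: 0; 2; 3; 1]];
  CBlock 0 2 [:: 0; 1; 0; 0] [:: 0; 2; 3] [:: 3] 1 0;
  CDiag [:: [:: 0; 3; 1; 2]; [:: 1; 0; 3; 2]; [:: 1; 2; 0; 3]];
  CBlock 1 3 [:: 3; 0; 2; 0] [:: 1; 2; 3] [:: 3] 0 1;
  CBlock 1 3 [:: 3; 0; 2; 0] [:: 0; 2; 3] [:: 3] 1 0;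
  CDiag [:: [:: 3; 0; 2; 1]; [:: 3; 1; 0; 2]; [:: 0; 2; 1; 3]];
  CBlock 0 3 [:: 0; 0; 2; 0] [:: 0; 1; 2] [:: 1] 3 3;
  CDiag [:: [:: 0; 1; 2; 3]; [:: 2; 0; 3; 1]; [:: 1; 0; 2; 3]];
  CDiag [:: [:: 0; 1; 2; 3]; [:: 2; 1; 3; 0]; [:: 1; 3; 2; 0]];
  CBlock 2 3 [:: 3; 3; 0; 0] [:: 1; 2] [:: 2; 3] 0 0;
  CBlock 0 3 [:: 0; 1; 1; 0] [:: 1] [:: 1; 2; 3] 0 0;
  CBlock 2 3 [:: 3; 1; 0; 0] [:: 0] [:: 1; 2; 3] 2 0;
  CBlock 0 3 [:: 0; 1; 1; 0] [:: 1; 2; 3] [:: 2] 0 0;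
  CDiag [:: [:: 0; 3; 1; 2]; [:: 1; 0; 3; 2]; [:: 1; 0; 3; 2]];
  CDiag [:: [:: 0; 2; 1; 3]; [:: 3; 2; 1; 0]; [:: 3; 1; 2; 0]];
  CDiag [:: [:: 0; 3; 1; 2]; [:: 3; 0; 1; 2]; [:: 3; 0; 2; 1]];
  CBlock 0 3 [:: 0; 2; 2; 0] [:: 1; 3] [:: 1; 2] 0 0;
  CDiag [:: [:: 0; 1; 2; 3]; [:: 2; 0; 3; 1]; [:: 2; 0; 1; 3]];
  CDiag [:: [:: 0; 1; 2; 3]; [:: 3; 2; 0; 1]; [:: 3; 2; 0; 1]];
  CBlock 2 3 [:: 1; 1; 0; 0] [:: 1; 2] [:: 2; 3] 0 0;
  CBlock 2 3 [:: 3; 3; 0; 0] [:: 1; 2; 3] [:: 2] 0 0;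
  CDiag [:: [:: 0; 1; 2; 3]; [:: 1; 2; 0; 3]; [:: 1; 3; 0; 2]];
  CBlock 0 1 [:: 0; 0; 1; 0] [:: 1] [:: 0; 2; 3] 0 1;
  CDiag [:: [:: 0; 3; 2; 1]; [:: 2; 0; 1; 3]; [:: 2; 0; 3; 1]];
  CBlock 2 3 [:: 3; 1; 0; 0] [:: 1] [:: 0; 2; 3] 0 1;
  CDiag [:: [:: 0; 3; 2; 1]; [:: 3; 0; 2; 1]; [:: 2; 0; 1; 3]];
  CDiag [:: [:: 0; 3; 2; 1]; [:: 3; 0; 2; 1]; [:: 0; 2; 1; 3]];
  CBlock 0 3 [:: 0; 0; 3; 0] [:: 0] [:: 0; 1; 2] 2 3;
  CBlock 0 3 [:: 0; 3; 3; 0] [:: 1] [:: 0; 1; 2] 2 3;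
  CBlock 0 3 [:: 0; 3; 3; 0] [:: 1; 3] [:: 1; 2] 0 0;
  CBlock 0 1 [:: 0; 0; 3; 3] [:: 2] [:: 0; 2; 3] 3 1;
  CBlock 1 3 [:: 3; 0; 3; 0] [:: 1] [:: 0; 1; 3] 3 2;
  CBlock 2 3 [:: 1; 3; 0; 0] [:: 0; 3] [:: 0; 3] 2 2;
  CDiag [:: [:: 0; 3; 2; 1]; [:: 3; 2; 0; 1]; [:: 3; 2; 0; 1]];
  CDiag [:: [:: 0; 3; 2; 1]; [:: 1; 2; 0; 3]; [:: 1; 2; 0; 3]];
  CBlock 2 3 [:: 1; 3; 0; 0] [:: 0] [:: 0; 1; 3] 2 2;
  CDiag [:: [:: 0; 3; 2; 1]; [:: 0; 3; 2; 1]; [:: 0; 3; 1; 2]];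
  CBlock 0 1 [:: 0; 0; 3; 3] [:: 3] [:: 0; 1; 2] 1 3;
  CBlock 1 3 [:: 3; 0; 1; 0] [:: 1] [:: 0; 1; 2] 0 3;
  CBlock 1 3 [:: 3; 0; 1; 0] [:: 1] [:: 0; 1; 2] 3 3;
  CDiag [:: [:: 1; 3; 2; 0]; [:: 1; 0; 3; 2]; [:: 0; 1; 2; 3]];
  CBlock 1 2 [:: 3; 0; 0; 3] [:: 0; 3] [:: 1; 2] 2 3;
  CBlock 2 3 [:: 1; 3; 0; 0] [:: 2; 3] [:: 1; 2] 1 0;
  CBlock 2 3 [:: 3; 1; 0; 0] [:: 0; 1] [:: 2; 3] 2 0;
  CDiag [:: [:: 0; 3; 2; 1]; [:: 3; 2; 0; 1]; [:: 3; 1; 0; 2]];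
  CBlock 2 3 [:: 1; 3; 0; 0] [:: 2] [:: 1; 2; 3] 1 0;
  CDiag [:: [:: 0; 3; 2; 1]; [:: 1; 2; 3; 0]; [:: 1; 3; 2; 0]];
  CBlock 2 3 [:: 3; 1; 0; 0] [:: 0] [:: 0; 2; 3] 3 1;
  CBlock 1 3 [:: 3; 0; 3; 0] [:: 1] [:: 0; 1; 2] 3 3;
  CBlock 0 3 [:: 0; 1; 3; 0] [:: 3] [:: 0; 1; 2] 1 3;
  CBlock 2 3 [:: 3; 3; 0; 0] [:: 1; 2; 3] [:: 3] 0 0;
  CBlock 2 3 [:: 1; 1; 0; 0] [:: 2; 3] [:: 1; 3] 0 0;
  CDiag [:: [:: 0; 1; 2; 3]; [:: 0; 2; 3; 1]; [:: 0; 1; 2; 3]];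
  CDiag [:: [:: 0; 3; 2; 1]; [:: 3; 1; 2; 0]; [:: 3; 0; 1; 2]];
  CDiag [:: [:: 0; 3; 2; 1]; [:: 2; 1; 3; 0]; [:: 3; 0; 2; 1]];
  CDiag [:: [:: 3; 0; 2; 1]; [:: 2; 1; 3; 0]; [:: 3; 0; 2; 1]];
  CBlock 1 3 [:: 0; 0; 2; 0] [:: 0; 3] [:: 1; 3] 2 0;
  CBlock 1 2 [:: 1; 0; 0; 0] [:: 3] [:: 0; 2; 3] 0 1;
  CDiag [:: [:: 0; 3; 2; 1]; [:: 3; 2; 1; 0]; [:: 2; 0; 3; 1]];
  CDiag [:: [:: 0; 3; 2; 1]; [:: 1; 2; 3; 0]; [:: 3; 0; 2; 1]];
  CBlock 0 1 [:: 0; 0; 3; 2] [:: 0; 1; 3] [:: 0] 2 2;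
  CBlock 0 1 [:: 0; 0; 1; 3] [:: 0; 3] [:: 0; 1] 2 2;
  CDiag [:: [:: 1; 0; 2; 3]; [:: 1; 3; 2; 0]; [:: 3; 2; 1; 0]];
  CBlock 0 2 [:: 0; 3; 0; 0] [:: 1] [:: 0; 1; 3] 0 2;
  CBlock 2 3 [:: 1; 3; 0; 0] [:: 0; 1; 3] [:: 0] 2 3;
  CBlock 0 3 [:: 0; 3; 2; 0] [:: 0; 2; 3] [:: 3] 1 0;
  CBlock 1 3 [:: 0; 0; 2; 0] [:: 3] [:: 0; 1; 3] 0 2;
  CBlock 0 3 [:: 0; 3; 2; 0] [:: 1; 3] [:: 2; 3] 0 1;
  CDiag [:: [:: 0; 1; 3; 2]; [:: 1; 0; 2; 3]; [:: 1; 0; 3; 2]];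
  CDiag [:: [:: 2; 0; 3; 1]; [:: 3; 1; 2; 0]; [:: 2; 0; 3; 1]];
  CDiag [:: [:: 0; 1; 2; 3]; [:: 1; 3; 0; 2]; [:: 1; 3; 0; 2]];
  CBlock 0 1 [:: 0; 0; 3; 2] [:: 0; 3] [:: 0; 2] 1 1;
  CBlock 2 3 [:: 1; 1; 0; 0] [:: 3] [:: 1; 2; 3] 0 0;
  CDiag [:: [:: 3; 2; 1; 0]; [:: 3; 1; 0; 2]; [:: 0; 2; 3; 1]];
  CBlock 0 3 [:: 0; 1; 0; 0] [:: 2; 3] [:: 1; 3] 1 0;
  CDiag [:: [:: 3; 2; 1; 0]; [:: 3; 1; 0; 2]; [:: 0; 2; 1; 3]];
  CBlock 1 2 [:: 3; 0; 0; 0] [:: 1] [:: 1; 2; 3] 3 0;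
  CDiag [:: [:: 0; 3; 2; 1]; [:: 1; 0; 3; 2]; [:: 1; 3; 2; 0]];
  CDiag [:: [:: 0; 3; 2; 1]; [:: 3; 0; 1; 2]; [:: 1; 2; 3; 0]];
  CDiag [:: [:: 0; 1; 2; 3]; [:: 2; 0; 1; 3]; [:: 2; 0; 3; 1]];
  CBlock 0 1 [:: 0; 0; 1; 3] [:: 0; 1] [:: 0; 3] 2 2;
  CBlock 1 3 [:: 0; 0; 2; 0] [:: 0; 1; 3] [:: 1] 2 0;
  CDiag [:: [:: 0; 3; 2; 1]; [:: 2; 1; 0; 3]; [:: 2; 3; 0; 1]];
  CBlock 0 2 [:: 0; 1; 0; 1] [:: 1; 2; 3] [:: 3] 0 2;
  CBlock 1 2 [:: 1; 0; 0; 0] [:: 3] [:: 0; 1; 3] 0 2;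
  CLine 2 [:: 1; 3; 0; 0];
  CBlock 1 2 [:: 1; 0; 0; 0] [:: 0; 2] [:: 1; 2] 1 0;
  CBlock 1 3 [:: 1; 0; 0; 0] [:: 3] [:: 0; 1; 3] 0 2;
  CBlock 2 3 [:: 1; 3; 0; 0] [:: 0] [:: 0; 1; 3] 3 2;
  CBlock 2 3 [:: 3; 1; 0; 0] [:: 0; 1] [:: 2; 3] 3 0;
  CDiag [:: [:: 3; 0; 2; 1]; [:: 3; 0; 2; 1]; [:: 0; 3; 1; 2]];
  CDiag [:: [:: 0; 3; 2; 1]; [:: 1; 0; 3; 2]; [:: 1; 2; 0; 3]];
  CBlock 0 3 [:: 0; 0; 0; 0] [:: 1] [:: 1; 2; 3] 0 0;
  CBlock 1 3 [:: 2; 0; 3; 0] [:: 2] [:: 0; 1; 3] 3 2;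
  CDiag [:: [:: 2; 0; 3; 1]; [:: 2; 0; 3; 1]; [:: 0; 1; 3; 2]];
  CBlock 0 3 [:: 0; 3; 3; 0] [:: 1; 2] [:: 2; 3] 0 0;
  CDiag [:: [:: 0; 3; 2; 1]; [:: 3; 0; 2; 1]; [:: 3; 2; 1; 0]];
  CDiag [:: [:: 1; 3; 2; 0]; [:: 1; 0; 2; 3]; [:: 0; 2; 1; 3]];
  CDiag [:: [:: 0; 1; 2; 3]; [:: 3; 1; 2; 0]; [:: 3; 2; 1; 0]];
  CDiag [:: [:: 0; 1; 2; 3]; [:: 3; 0; 2; 1]; [:: 3; 0; 1; 2]];
  CDiag [:: [:: 0; 1; 2; 3]; [:: 1; 2; 3; 0]; [:: 1; 3; 2; 0]];
  CDiag [:: [:: 0; 1; 2; 3]; [:: 1; 0; 3; 2]; [:: 1; 0; 2; 3]];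
  CDiag [:: [:: 1; 3; 2; 0]; [:: 1; 0; 2; 3]; [:: 0; 3; 1; 2]];
  CBlock 1 3 [:: 3; 0; 3; 0] [:: 0] [:: 1; 2; 3] 1 0;
  CDiag [:: [:: 1; 0; 2; 3]; [:: 1; 2; 3; 0]; [:: 3; 1; 2; 0]];
  CDiag [:: [:: 3; 0; 2; 1]; [:: 0; 2; 1; 3]; [:: 2; 1; 3; 0]];
  CDiag [:: [:: 3; 1; 2; 0]; [:: 2; 0; 1; 3]; [:: 2; 0; 3; 1]];
  CDiag [:: [:: 1; 3; 2; 0]; [:: 2; 0; 1; 3]; [:: 0; 2; 3; 1]];
  CBlock 2 3 [:: 0; 3; 0; 0] [:: 0; 1; 2] [:: 2] 3 0;
  CBlock 0 2 [:: 0; 1; 0; 0] [:: 0; 2; 3] [:: 2] 1 0;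
  CBlock 1 3 [:: 0; 0; 1; 0] [:: 0; 1; 2] [:: 3] 3 2;
  CDiag [:: [:: 2; 3; 1; 0]; [:: 1; 0; 2; 3]; [:: 3; 2; 0; 1]];
  CBlock 0 3 [:: 0; 2; 2; 0] [:: 2] [:: 1; 2; 3] 0 0;
  CDiag [:: [:: 0; 1; 2; 3]; [:: 3; 0; 2; 1]; [:: 3; 0; 2; 1]];
  CBlock 2 3 [:: 3; 3; 0; 0] [:: 1; 2; 3] [:: 1] 0 0;
  CBlock 0 3 [:: 0; 1; 3; 0] [:: 1] [:: 1; 2; 3] 3 0;
  CDiag [:: [:: 0; 1; 2; 3]; [:: 0; 3; 1; 2]; [:: 0; 2; 3; 1]];
  CBlock 2 3 [:: 2; 2; 0; 0] [:: 2; 3] [:: 1; 3] 0 0;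
  CBlock 2 3 [:: 2; 2; 0; 0] [:: 1; 2; 3] [:: 1] 0 0;
  CDiag [:: [:: 0; 1; 2; 3]; [:: 1; 0; 2; 3]; [:: 1; 0; 3; 2]];
  CDiag [:: [:: 0; 1; 2; 3]; [:: 2; 0; 1; 3]; [:: 2; 0; 1; 3]];
  CBlock 0 3 [:: 0; 3; 3; 0] [:: 3] [:: 1; 2; 3] 0 0;
  CDiag [:: [:: 0; 1; 2; 3]; [:: 2; 1; 3; 0]; [:: 2; 1; 3; 0]];
  CDiag [:: [:: 0; 1; 2; 3]; [:: 2; 3; 1; 0]; [:: 2; 3; 1; 0]];
  CDiag [:: [:: 0; 1; 2; 3]; [:: 0; 1; 3; 2]; [:: 0; 3; 2; 1]];
  CBlock 2 3 [:: 1; 1; 0; 0] [:: 1; 2; 3] [:: 3] 0 0;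
  CDiag [:: [:: 0; 1; 2; 3]; [:: 2; 1; 0; 3]; [:: 2; 1; 0; 3]];
  CBlock 2 3 [:: 2; 2; 0; 0] [:: 1; 2] [:: 1; 2] 0 0;
  CBlock 2 3 [:: 1; 1; 0; 0] [:: 1; 2] [:: 1; 3] 0 0;
  CDiag [:: [:: 0; 1; 2; 3]; [:: 0; 2; 1; 3]; [:: 0; 1; 2; 3]];
  CDiag [:: [:: 0; 3; 2; 1]; [:: 1; 0; 3; 2]; [:: 1; 2; 3; 0]];
  CBlock 0 2 [:: 0; 1; 0; 0] [:: 3] [:: 0; 2; 3] 0 1;
  CBlock 2 3 [:: 1; 1; 0; 0] [:: 1; 2; 3] [:: 1] 0 0;
  CDiag [:: [:: 0; 3; 2; 1]; [:: 2; 1; 3; 0]; [:: 2; 1; 3; 0]];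
  CDiag [:: [:: 0; 3; 2; 1]; [:: 2; 3; 1; 0]; [:: 2; 1; 3; 0]];
  CDiag [:: [:: 0; 3; 2; 1]; [:: 2; 0; 3; 1]; [:: 2; 1; 3; 0]];
  CBlock 1 2 [:: 1; 0; 0; 1] [:: 3] [:: 0; 1; 3] 1 2;
  CDiag [:: [:: 0; 1; 2; 3]; [:: 1; 3; 2; 0]; [:: 1; 2; 3; 0]];
  CBlock 2 3 [:: 3; 3; 0; 0] [:: 3] [:: 1; 2; 3] 0 0;
  CDiag [:: [:: 0; 1; 2; 3]; [:: 2; 3; 0; 1]; [:: 2; 3; 0; 1]];
  CDiag [:: [:: 0; 1; 2; 3]; [:: 1; 2; 0; 3]; [:: 1; 2; 0; 3]];
  CBlock 2 3 [:: 3; 3; 0; 0] [:: 1; 3] [:: 1; 2] 0 0;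
  CBlock 2 3 [:: 1; 1; 0; 0] [:: 2; 3] [:: 1; 2] 0 0;
  CDiag [:: [:: 0; 1; 2; 3]; [:: 3; 2; 0; 1]; [:: 3; 1; 0; 2]];
  CBlock 2 3 [:: 3; 3; 0; 0] [:: 1; 3] [:: 2; 3] 0 0;
  CDiag [:: [:: 0; 1; 2; 3]; [:: 2; 0; 3; 1]; [:: 3; 0; 1; 2]];
  CDiag [:: [:: 0; 1; 2; 3]; [:: 1; 0; 2; 3]; [:: 2; 0; 3; 1]];
  CBlock 0 1 [:: 0; 0; 2; 3] [:: 0; 1; 3] [:: 0] 2 2;
  CDiag [:: [:: 1; 0; 2; 3]; [:: 1; 2; 3; 0]; [:: 0; 3; 1; 2]];
  CDiag [:: [:: 1; 0; 2; 3]; [:: 1; 2; 3; 0]; [:: 2; 3; 1; 0]];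
  CBlock 0 2 [:: 0; 3; 0; 2] [:: 3] [:: 0; 2; 3] 0 1;
  CBlock 0 1 [:: 0; 0; 1; 2] [:: 0] [:: 0; 1; 3] 2 2;
  CBlock 2 3 [:: 2; 2; 0; 0] [:: 1; 3] [:: 2; 3] 0 0;
  CDiag [:: [:: 0; 1; 2; 3]; [:: 3; 2; 1; 0]; [:: 3; 1; 2; 0]];
  CDiag [:: [:: 0; 1; 2; 3]; [:: 0; 3; 2; 1]; [:: 0; 1; 3; 2]];
  CDiag [:: [:: 0; 1; 2; 3]; [:: 2; 3; 1; 0]; [:: 3; 1; 2; 0]];
  CDiag [:: [:: 1; 0; 2; 3]; [:: 3; 2; 0; 1]; [:: 2; 3; 0; 1]];
  CDiag [:: [:: 0; 1; 2; 3]; [:: 3; 0; 2; 1]; [:: 2; 0; 3; 1]];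
  CDiag [:: [:: 0; 1; 2; 3]; [:: 3; 1; 2; 0]; [:: 1; 2; 3; 0]];
  CDiag [:: [:: 1; 0; 2; 3]; [:: 3; 2; 1; 0]; [:: 1; 3; 2; 0]];
  CBlock 1 3 [:: 0; 0; 3; 0] [:: 0; 1] [:: 1; 2] 3 0;
  CDiag [:: [:: 0; 1; 2; 3]; [:: 2; 3; 0; 1]; [:: 2; 1; 0; 3]];
  CBlock 2 3 [:: 1; 1; 0; 0] [:: 2; 3] [:: 2; 3] 0 0;
  CDiag [:: [:: 0; 1; 2; 3]; [:: 2; 1; 0; 3]; [:: 2; 3; 0; 1]];
  CDiag [:: [:: 0; 1; 2; 3]; [:: 0; 1; 2; 3]; [:: 0; 2; 3; 1]];
  CBlock 2 3 [:: 3; 3; 0; 0] [:: 2; 3] [:: 2; 3] 0 0;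
  CBlock 2 3 [:: 2; 2; 0; 0] [:: 1] [:: 1; 2; 3] 0 0;
  CBlock 0 2 [:: 0; 3; 0; 2] [:: 3] [:: 1; 2; 3] 1 0;
  CDiag [:: [:: 0; 1; 2; 3]; [:: 1; 2; 0; 3]; [:: 3; 1; 0; 2]];
  CDiag [:: [:: 0; 1; 2; 3]; [:: 0; 2; 1; 3]; [:: 0; 3; 1; 2]];
  CBlock 2 3 [:: 2; 2; 0; 0] [:: 1; 2; 3] [:: 2] 0 0;
  CDiag [:: [:: 0; 1; 2; 3]; [:: 2; 3; 0; 1]; [:: 1; 2; 0; 3]];
  CDiag [:: [:: 3; 1; 2; 0]; [:: 3; 1; 2; 0]; [:: 0; 3; 2; 1]];
  CBlock 0 2 [:: 0; 0; 0; 1] [:: 3] [:: 0; 2; 3] 0 1;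
  CDiag [:: [:: 2; 1; 0; 3]; [:: 1; 3; 2; 0]; [:: 3; 2; 1; 0]];
  CDiag [:: [:: 3; 1; 2; 0]; [:: 1; 0; 2; 3]; [:: 3; 0; 2; 1]];
  CBlock 0 1 [:: 0; 0; 1; 3] [:: 0] [:: 0; 2; 3] 1 1;
  CDiag [:: [:: 0; 1; 2; 3]; [:: 1; 0; 3; 2]; [:: 1; 0; 3; 2]];
  CDiag [:: [:: 1; 3; 2; 0]; [:: 1; 0; 3; 2]; [:: 0; 2; 3; 1]];
  CDiag [:: [:: 0; 1; 2; 3]; [:: 0; 2; 3; 1]; [:: 0; 1; 3; 2]];
  CDiag [:: [:: 2; 1; 0; 3]; [:: 2; 3; 0; 1]; [:: 0; 1; 3; 2]];
  CBlock 2 3 [:: 1; 1; 0; 0] [:: 1; 2] [:: 1; 2] 0 0;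
  CBlock 2 3 [:: 1; 1; 0; 0] [:: 2] [:: 1; 2; 3] 0 0;
  CBlock 2 3 [:: 2; 2; 0; 0] [:: 1; 2] [:: 1; 3] 0 0;
  CDiag [:: [:: 0; 1; 2; 3]; [:: 3; 1; 0; 2]; [:: 3; 2; 0; 1]];
  CDiag [:: [:: 0; 1; 2; 3]; [:: 0; 2; 3; 1]; [:: 0; 3; 1; 2]];
  CBlock 2 3 [:: 3; 3; 0; 0] [:: 2; 3] [:: 1; 2] 0 0;
  CDiag [:: [:: 1; 0; 2; 3]; [:: 1; 0; 2; 3]; [:: 0; 3; 2; 1]];
  CDiag [:: [:: 0; 1; 2; 3]; [:: 0; 2; 1; 3]; [:: 0; 3; 2; 1]];
  CBlock 0 3 [:: 0; 0; 0; 0] [:: 1; 2; 3] [:: 3] 0 0;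
  CDiag [:: [:: 2; 1; 3; 0]; [:: 2; 3; 1; 0]; [:: 0; 1; 2; 3]];
  CDiag [:: [:: 2; 1; 3; 0]; [:: 2; 1; 3; 0]; [:: 0; 2; 1; 3]];
  CBlock 0 1 [:: 0; 0; 1; 2] [:: 2] [:: 0; 2; 3] 1 1;
  CBlock 0 1 [:: 0; 0; 3; 1] [:: 2] [:: 0; 2; 3] 1 1;
  CDiag [:: [:: 2; 1; 0; 3]; [:: 2; 3; 1; 0]; [:: 3; 1; 2; 0]];
  CDiag [:: [:: 1; 3; 0; 2]; [:: 1; 0; 3; 2]; [:: 0; 2; 1; 3]];
  CBlock 0 1 [:: 0; 0; 2; 3] [:: 0; 2; 3] [:: 2] 1 1;
  CBlock 2 3 [:: 2; 2; 0; 0] [:: 2] [:: 1; 2; 3] 0 0;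
  CBlock 2 3 [:: 3; 3; 0; 0] [:: 1; 3] [:: 1; 3] 0 0;
  CBlock 0 2 [:: 0; 0; 0; 3] [:: 1; 2; 3] [:: 0] 0 3;
  CDiag [:: [:: 2; 1; 0; 3]; [:: 2; 1; 3; 0]; [:: 3; 2; 1; 0]];
  CDiag [:: [:: 2; 1; 0; 3]; [:: 2; 0; 3; 1]; [:: 0; 3; 1; 2]];
  CBlock 0 1 [:: 0; 0; 2; 3] [:: 0; 1; 2] [:: 2] 3 3;
  CBlock 1 2 [:: 1; 0; 0; 3] [:: 1] [:: 0; 1; 3] 2 2;
  CDiag [:: [:: 3; 1; 2; 0]; [:: 3; 2; 1; 0]; [:: 0; 3; 2; 1]];
  CDiag [:: [:: 0; 1; 2; 3]; [:: 0; 3; 1; 2]; [:: 0; 1; 2; 3]];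
  CDiag [:: [:: 2; 1; 0; 3]; [:: 2; 1; 0; 3]; [:: 0; 2; 1; 3]];
  CBlock 0 2 [:: 0; 0; 0; 1] [:: 1; 2; 3] [:: 0] 0 1;
  CDiag [:: [:: 3; 0; 2; 1]; [:: 3; 0; 1; 2]; [:: 0; 1; 2; 3]];
  CBlock 0 1 [:: 0; 0; 2; 3] [:: 3] [:: 0; 1; 3] 2 2;
  CDiag [:: [:: 3; 1; 2; 0]; [:: 3; 1; 0; 2]; [:: 0; 2; 1; 3]];
  CDiag [:: [:: 3; 1; 2; 0]; [:: 3; 1; 0; 2]; [:: 1; 2; 0; 3]];
  CBlock 1 2 [:: 2; 0; 0; 1] [:: 2] [:: 0; 1; 2] 3 3;
  CBlock 0 1 [:: 0; 0; 3; 1] [:: 0; 2; 3] [:: 3] 1 1;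
  CDiag [:: [:: 0; 1; 2; 3]; [:: 0; 3; 1; 2]; [:: 0; 3; 2; 1]];
  CBlock 2 3 [:: 3; 3; 0; 0] [:: 2] [:: 1; 2; 3] 0 0;
  CDiag [:: [:: 0; 1; 2; 3]; [:: 1; 0; 3; 2]; [:: 2; 0; 1; 3]];
  CDiag [:: [:: 3; 1; 2; 0]; [:: 3; 1; 0; 2]; [:: 0; 1; 2; 3]];
  CDiag [:: [:: 3; 1; 2; 0]; [:: 1; 0; 3; 2]; [:: 2; 0; 1; 3]];
  CBlock 0 2 [:: 0; 2; 0; 2] [:: 2] [:: 0; 2; 3] 0 1;
  CBlock 1 3 [:: 0; 0; 1; 0] [:: 0; 2; 3] [:: 2] 1 0;
  CBlock 2 3 [:: 3; 3; 0; 0] [:: 1; 2] [:: 1; 2] 0 0;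
  CDiag [:: [:: 1; 0; 2; 3]; [:: 1; 0; 3; 2]; [:: 0; 2; 3; 1]];
  CDiag [:: [:: 0; 1; 2; 3]; [:: 0; 1; 3; 2]; [:: 0; 2; 3; 1]];
  CBlock 1 3 [:: 1; 0; 0; 0] [:: 0; 2; 3] [:: 2] 1 0;
  CBlock 2 3 [:: 2; 2; 0; 0] [:: 1; 2] [:: 2; 3] 0 0;
  CDiag [:: [:: 0; 2; 1; 3]; [:: 3; 0; 1; 2]; [:: 3; 2; 0; 1]];
  CDiag [:: [:: 2; 1; 0; 3]; [:: 2; 3; 0; 1]; [:: 0; 2; 1; 3]];
  CBlock 0 3 [:: 0; 0; 0; 0] [:: 1; 2; 3] [:: 1] 0 0;
  CDiag [:: [:: 2; 0; 1; 3]; [:: 2; 0; 3; 1]; [:: 0; 1; 2; 3]];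
  CDiag [:: [:: 2; 0; 1; 3]; [:: 2; 0; 1; 3]; [:: 0; 1; 3; 2]];
  CBlock 0 1 [:: 0; 0; 3; 2] [:: 2] [:: 0; 1; 2] 3 3;
  CBlock 1 3 [:: 2; 0; 1; 0] [:: 1] [:: 0; 2; 3] 2 1;
  CDiag [:: [:: 2; 1; 0; 3]; [:: 2; 0; 3; 1]; [:: 1; 0; 2; 3]];
  CBlock 0 1 [:: 0; 0; 2; 1] [:: 0; 1; 2] [:: 2] 3 3;
  CDiag [:: [:: 0; 1; 2; 3]; [:: 0; 2; 1; 3]; [:: 0; 1; 3; 2]];
  CDiag [:: [:: 1; 0; 2; 3]; [:: 1; 0; 2; 3]; [:: 0; 2; 1; 3]];
  CDiag [:: [:: 0; 1; 2; 3]; [:: 1; 0; 2; 3]; [:: 1; 0; 2; 3]];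
  CBlock 2 3 [:: 1; 1; 0; 0] [:: 1] [:: 1; 2; 3] 0 0;
  CBlock 2 3 [:: 1; 1; 0; 0] [:: 1; 3] [:: 1; 2] 0 0;
  CDiag [:: [:: 1; 2; 0; 3]; [:: 1; 0; 2; 3]; [:: 0; 2; 1; 3]];
  CDiag [:: [:: 3; 1; 2; 0]; [:: 3; 1; 0; 2]; [:: 2; 3; 0; 1]];
  CDiag [:: [:: 3; 1; 2; 0]; [:: 3; 1; 0; 2]; [:: 0; 3; 2; 1]];
  CBlock 0 1 [:: 0; 0; 3; 2] [:: 0; 2; 3] [:: 3] 1 1;
  CBlock 1 2 [:: 2; 0; 0; 2] [:: 2] [:: 0; 1; 2] 3 3;
  CDiag [:: [:: 1; 0; 2; 3]; [:: 1; 0; 2; 3]; [:: 0; 3; 1; 2]];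
  CDiag [:: [:: 2; 1; 0; 3]; [:: 2; 1; 0; 3]; [:: 0; 1; 3; 2]];
  CDiag [:: [:: 1; 3; 2; 0]; [:: 1; 2; 3; 0]; [:: 0; 1; 2; 3]];
  CBlock 0 1 [:: 0; 0; 2; 1] [:: 1] [:: 0; 1; 3] 2 2;
  CDiag [:: [:: 1; 0; 2; 3]; [:: 1; 2; 0; 3]; [:: 0; 1; 3; 2]];
  CDiag [:: [:: 1; 0; 2; 3]; [:: 1; 2; 0; 3]; [:: 3; 1; 0; 2]];
  CBlock 1 2 [:: 2; 0; 0; 3] [:: 2] [:: 0; 2; 3] 1 1;
  CBlock 0 1 [:: 0; 0; 1; 3] [:: 0; 1; 2] [:: 1] 3 3;
  CDiag [:: [:: 0; 1; 2; 3]; [:: 3; 2; 1; 0]; [:: 3; 2; 1; 0]]].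

Definition cert4_steps : seq (seq nat * seq nat) := [::
  ([:: 283; 455; 79; 197; 148], [:: 0; 1; 2; 3; 4]);
  ([:: 500; 244; 468; 352; 376; 59; 399; 35; 213; 416], [:: 5; 6; 7; 8; 9; 10; 11; 12; 13; 14; 15; 16]);
  ([:: 501; 318; 59; 298; 213], [:: 17; 18; 19; 20; 6; 21; 22; 23; 24; 25]);
  ([:: 35; 416; 468; 59; 244; 352; 500; 213; 399], [:: 395; 26]);
  ([:: 111; 283; 399; 500; 244; 59; 290; 192; 213; 373; 352], [:: 18; 19; 5; 6; 27; 28; 8; 397; 29; 30; 13; 31; 32; 33; 34]);
  ([:: 419; 213; 352; 373; 79; 204; 437; 192; 196], [:: 18; 6; 13; 30; 9; 35; 36; 37]);
  ([:: 59; 318; 46; 196; 204; 298; 290; 213; 399; 283], [:: 17; 18; 19; 5; 38; 20; 1; 39; 40; 396; 7; 10; 398; 41; 3; 42; 399; 43; 44; 29; 45; 46; 26; 47]);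
  ([:: 372; 468; 500; 234], [:: 18; 19; 5; 20; 6; 1; 48; 7; 49; 50; 51; 52]);
  ([:: 27; 110; 399; 46; 213], [:: 17; 19; 5; 20; 1; 53; 54; 55; 56; 57; 58; 59]);
  ([:: 372; 213; 500; 399; 204; 196; 298; 35], [:: 19; 5; 20; 6; 1; 60; 7; 61; 51; 62; 63; 64; 65; 66]);
  ([:: 500; 298; 196; 204; 35; 58; 399; 46; 307; 318; 213; 283], [:: 0; 19; 5; 6; 67; 1; 403; 68; 11; 69; 70; 402; 53; 71; 27; 55; 72; 8; 73; 74; 75; 76; 77; 78; 79]);
  ([:: 501; 298; 283; 318; 213], [:: 17; 18; 19; 20; 6; 22; 21; 80; 81; 25]);
  ([:: 399; 318; 46; 500; 298; 213; 486; 283], [:: 18; 0; 19; 38; 20; 6; 67; 1; 82; 83; 84; 85; 400; 404; 86; 29; 87; 88; 89; 90; 91; 92; 93; 94; 95; 96; 2; 97; 98; 99; 100]);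
  ([:: 27; 111; 398; 373; 213; 154; 298], [:: 17; 0; 19; 5; 20; 67; 1; 53; 101; 102; 103; 104; 105; 106; 107; 58; 108]);
  ([:: 142; 398; 51; 192; 213; 437; 283; 373; 416; 154; 26; 234; 111; 91], [:: 18; 0; 38; 67; 1; 109; 110; 111; 112; 113; 15; 114; 115; 116; 92; 117; 118; 119; 120; 121; 122; 123; 124; 125]);
  ([:: 111; 298; 398; 51; 500; 34; 58; 283; 213], [:: 18; 19; 5; 20; 6; 67; 1; 28; 27; 8; 126; 76; 127; 401; 407; 69; 408; 128; 129; 130; 131; 132; 133; 134; 135; 136; 137; 138; 139]);
  ([:: 143; 51; 26; 34; 58; 500; 437; 283; 213], [:: 18; 19; 20; 6; 1; 130; 129; 128; 134; 133; 132; 131; 137; 136; 135; 138; 139]);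
  ([:: 192; 213; 437; 110; 478; 291; 194; 79; 283], [:: 18; 19; 67; 113; 140; 141; 142; 143; 144; 145; 146; 394]);
  ([:: 193; 373; 318; 478; 298], [:: 18; 0; 5; 6; 1; 147; 148; 149; 150; 66]);
  ([:: 271; 283; 79; 437; 192; 478; 110; 213; 34], [:: 19; 67; 111; 112; 411; 29]);
  ([:: 437; 110; 478; 192; 79; 398; 283; 58; 34; 51; 213; 500; 298], [:: 0; 19; 38; 20; 6; 1; 413; 151; 410; 128; 53; 131; 152; 153; 136; 154; 155; 156]);
  ([:: 245; 298; 318], [:: 18; 0; 19; 5; 20; 6; 1; 157; 51; 81; 150; 158; 66; 159; 160; 161]);
  ([:: 58; 298; 500; 213; 34; 437; 79; 283; 398; 110; 192; 478], [:: 0; 162; 414]);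
  ([:: 27; 437; 46; 143; 283; 213; 224; 122; 254; 500; 110], [:: 17; 5; 20; 67; 1; 163; 53; 164; 165; 166; 104; 105; 167; 168; 169; 170; 171]);
  ([:: 347; 122; 26; 410; 213; 486; 46; 373; 478], [:: 17; 0; 19; 5; 1; 172; 173; 174; 175; 176; 177; 178; 179; 180; 181]);
  ([:: 431; 213; 373; 346; 59], [:: 17; 5; 20; 105; 104; 103; 182]);
  ([:: 34; 192; 298; 500; 254; 224; 283; 437; 46; 486; 410; 213; 79; 398; 110; 478; 458; 234; 373], [:: 17; 18; 19; 5; 20; 6; 1; 413; 109; 130; 416; 417; 418; 419; 183; 184; 185; 186; 56; 187; 188; 189; 190; 191; 192]);
  ([:: 59; 79; 398; 192; 110; 500; 254; 224; 283; 35; 478; 46; 486; 410; 373; 437; 213], [:: 18; 38; 20; 6; 1; 193; 151; 194; 195; 130; 196; 417; 197; 418; 32; 117; 198; 199; 419; 200; 201; 202]);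
  ([:: 143; 373; 26; 58; 91; 478; 35; 437; 234], [:: 18; 19; 5; 20; 198; 130; 195; 133; 203; 204; 205; 206; 207; 208; 209; 32; 210; 211; 212]);
  ([:: 142; 192; 213; 437; 298; 110; 283; 398; 79; 478], [:: 18; 19; 67; 151; 111; 113; 411; 140; 83; 141; 213; 142; 214; 144; 215]);
  ([:: 110; 244; 458; 486; 398; 298; 192; 500; 213; 283; 46; 478; 373], [:: 18; 19; 5; 20; 6; 1; 216; 217; 3; 42; 218; 126; 219; 420; 421; 423; 130; 417; 197; 422]);
  ([:: 271; 213; 373; 283; 416; 437; 192; 234], [:: 18; 5; 38; 20; 67; 111; 112; 113; 15; 114; 117; 92; 220; 221; 222; 223]);
  ([:: 58; 122; 234; 437; 478; 143; 26; 373; 213; 283; 111; 500; 298; 398], [:: 18; 134; 224; 225; 422; 409; 226]);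
  ([:: 410; 478; 46; 486; 122; 26; 154; 59; 373; 270; 111; 398; 213; 283; 244; 500], [:: 17; 19; 38; 67; 418; 227; 228; 419; 229; 102; 176; 230; 231; 232; 233; 234; 235]);
  ([:: 213; 283], [:: 18; 0; 19; 5; 20; 6; 67; 1; 236; 237; 238; 239; 405; 406; 415; 7; 240; 241; 412; 424; 27; 28; 8; 127; 126; 407; 425; 109; 130; 426; 427; 115; 242; 217; 113; 243; 244; 245; 246; 247; 248; 249; 250; 251]);
  ([:: 111; 283; 212; 254; 234; 437], [:: 17; 18; 19; 38; 6; 1; 27; 252; 253; 50; 254; 255; 256]);
  ([:: 244; 500; 212; 254], [:: 18; 19; 5; 20; 67; 257; 258; 259; 260; 261]);
  ([:: 244; 212; 254; 234; 373], [:: 17; 18; 5; 20; 6; 430; 258; 21; 262; 263; 254; 52; 264]);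
  ([:: 373; 234; 254; 212], [:: 17; 18; 19; 5; 20; 6; 241; 240; 431; 51; 157; 265; 190; 50; 263; 266; 267; 268; 269]);
  ([:: 501; 283; 110; 234; 437], [:: 18; 0; 19; 20; 6; 270; 262; 271; 41; 272; 273; 274; 275; 276]);
  ([:: 437; 212; 283], [:: 18; 19; 5; 20; 6; 1; 126; 219; 429; 432; 433; 401; 277; 259; 212; 278; 279; 280; 281; 282; 283]);
  ([:: 234; 362; 202; 446; 454; 469; 245; 382; 309], [:: 18; 0; 19; 5; 6; 67; 1; 282; 272; 280; 66; 284; 261; 285; 286; 287; 288; 289; 290; 291]);
  ([:: 372; 500; 436; 283; 382; 362; 469], [:: 17; 18; 0; 5; 20; 6; 67; 1; 7; 292; 2; 157; 293; 435; 294; 295; 81; 415; 287; 296; 297; 298; 299; 300]);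
  ([:: 235; 469; 478; 458; 362], [:: 17; 18; 19; 5; 20; 6; 301; 294; 190; 149; 280; 210; 302]);
  ([:: 500; 283; 436; 212], [:: 17; 18; 0; 19; 5; 20; 6; 8; 259; 277; 436; 240; 241; 437; 432; 212; 303; 304; 210; 150; 305; 266]);
  ([:: 234; 170; 436; 190; 350; 283; 198], [:: 17; 18; 19; 5; 20; 6; 67; 1; 272; 293; 283; 306; 81; 307; 263; 192; 308; 309; 212; 265; 310; 311; 312; 37; 313; 314; 315; 316]);
  ([:: 283], [:: 17; 18; 0; 19; 5; 38; 20; 6; 1; 428; 434; 438; 21; 317; 262; 22; 318; 439; 301; 81; 319; 294; 320; 321; 322; 252; 323; 324; 309; 325; 326; 327; 328; 329; 330; 331; 332; 333; 334; 335; 336]);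
  ([:: 501; 436; 212; 446; 235], [:: 17; 18; 0; 19; 5; 38; 20; 6; 1; 22; 262; 317; 21; 81; 320; 294; 283; 323; 337; 322; 321; 263; 260; 325; 161; 305; 338; 303; 327; 339; 331; 333; 340; 341; 342; 343]);
  ([:: 235; 436; 212], [:: 17; 18; 19; 5; 38; 20; 6; 67; 301; 441; 8; 294; 277; 259; 284; 81; 260; 280; 279; 306; 24; 302; 344; 328; 345; 346; 347; 348; 349; 350; 351; 352; 353]);
  ([:: 500; 212; 436; 234], [:: 17; 18; 0; 19; 5; 20; 6; 67; 1; 8; 259; 277; 212; 50; 263; 210; 267; 42; 354; 293; 157; 355; 272; 435; 356; 241; 357; 358; 359; 360]);
  ([:: 436; 212], [:: 17; 18; 0; 19; 5; 38; 20; 6; 67; 1; 440; 442; 443; 21; 317; 262; 22; 272; 319; 293; 361; 160; 81; 306; 362; 363; 161; 259; 192; 364; 24; 159; 365; 366; 367; 312; 368; 369; 370; 371; 372; 373; 154; 374]);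
  ([:: 501; 234; 437; 254], [:: 17; 18; 5; 20; 6; 1; 262; 21; 272; 375; 283; 281]);
  ([:: 212], [:: 18; 19; 5; 20; 6; 67; 1; 444; 219; 126; 432; 445; 401; 277; 259; 212; 261; 279; 280; 281; 282; 283]);
  ([:: 469; 254], [:: 18; 19; 5; 6; 1; 446; 239; 238; 259; 277; 281; 24; 158]);
  ([:: 382; 254; 234; 192], [:: 17; 18; 0; 19; 5; 20; 6; 67; 1; 440; 446; 238; 261; 376; 377; 266; 280; 364; 321; 378; 379; 380; 269; 37; 381; 382; 383; 384]);
  ([:: 437], [:: 17; 18; 0; 19; 5; 38; 20; 6; 1; 446; 239; 238; 415; 126; 219; 445; 7; 241; 240; 412; 447; 448; 46; 385; 375; 265; 378; 210; 386; 149; 339; 387; 388; 389; 390; 391; 392]);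
  ([:: 500], [:: 18; 19; 5; 6; 1; 446; 239; 238; 415; 449; 42; 8; 393; 277; 24]);
  ([::], [:: 17; 18; 19; 20; 6; 1; 446; 239; 238; 450; 21; 22; 81; 24; 25])].

Lemma cert4_ok :
  certificate_ok (clause_of 4 units4 diag4_ok) cert4_clauses (decode_steps 4 cert4_steps).
Proof. by vm_compute. Qed.

Lemma has_pos_diagonal_of_units4 (R : numDomainType) (A : mdmatrix R 4 4) :
  polystochastic A -> (forall c, c \in units4 -> 0 < A (decode c)) -> has_pos_diagonal A.
Proof.
move=> HA units_pos; case: (boolP (has_pos_diagonal A)) => // no_diag; exfalso.
apply: (negP (certificate_sound HA units_pos _ _ _) cert4_ok) => ls /andP [/eqP ls3 Hls] l_pos.
case/negP: no_diag; apply: (has_pos_diagonal_imset ord0 _ l_pos) => j.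
by apply: transversal_inj; rewrite ?ls3.
Qed.

Theorem theorem2 (R : realFieldType) (A : mdmatrix R 4 4) :
  polystochastic A -> 0 < per A.
Proof.
move=> HA; have [g units_pos] := normalize4 HA.
apply: per_gt0; first by case: HA.
apply: (has_pos_diagonal_relab (g := g)).
exact: has_pos_diagonal_of_units4 (polystochastic_relab g HA) units_pos.
Qed.
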